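(* Let $V$ be an Orlicz function and $R\in(0,\infty)$. Define $\varphi_V:(-\infty,0)\times C_b(\mathbb R)\to\mathbb R$ by $\varphi_V(\alpha,\lambda):=\log\int_{\mathbb R}e^{\alpha V(x)+\lambda(x)}dx$. Then for each $\lambda\in C_b(\mathbb R)$ there exists a unique $\alpha=\alpha(\lambda)\in(-\infty,0)$ such that $$\frac{d}{d\alpha}\varphi_V(\alpha(\lambda),\lambda)=R\quad\text{and}\quad\frac{d^2}{d\alpha^2}\varphi_V(\alpha(\lambda),\lambda)\in(0,\infty).$$ Moreover, the map $\lambda\mapsto\varphi_V(\alpha(\lambda),\lambda)$ is Fréchet-differentiable on $C_b(\mathbb R)$, and $$\varphi_V(\alpha(\lambda),\lambda)-\alpha(\lambda)R=\inf_{\alpha<0}\big[\varphi_V(\alpha,\lambda)-\alpha R\big].$$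
   Context: An Orlicz function is a convex, symmetric function $V:\mathbb R\to[0,\infty)$ with $V(0)=0$ and $V(x)>0$ for $x\ne0$. $C_b(\mathbb R)$ denotes the space of bounded continuous real functions on $\mathbb R$ with the supremum norm. *)

From Stdlib Require Import Reals.
From Coquelicot Require Import Coquelicot.
Open Scope R_scope.

Definition Orlicz (V : R -> R) : Prop :=
  (forall x y t, 0 <= t <= 1 -> V (t * x + (1 - t) * y) <= t * V x + (1 - t) * V y) /\
  (forall x, V (- x) = V x) /\
  V 0 = 0 /\
  (forall x, 0 <= V x) /\
  (forall x, x <> 0 -> 0 < V x).

Definition Cb (f : R -> R) : Prop :=
  (forall x, continuous f x) /\ (exists M, forall x, Rabs (f x) <= M).

Definition supnorm (f : R -> R) : R :=
  real (Lub_Rbar (fun y => exists x, y = Rabs (f x))).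

Definition phiV (V : R -> R) (alpha : R) (lam : R -> R) : R :=
  ln (RInt_gen (fun x => exp (alpha * V x + lam x))
               (Rbar_locally m_infty) (Rbar_locally p_infty)).

Definition bounded_linear_Cb (L : (R -> R) -> R) : Prop :=
  (forall f g, Cb f -> Cb g -> L (fun x => f x + g x) = L f + L g) /\
  (forall c f, Cb f -> L (fun x => c * f x) = c * L f) /\
  (exists C, forall f, Cb f -> Rabs (L f) <= C * supnorm f).

Definition Frechet_diff_Cb (F : (R -> R) -> R) (lam : R -> R) : Prop :=
  exists L, bounded_linear_Cb L /\
    forall eps, 0 < eps -> exists delta, 0 < delta /\
      forall h, Cb h -> supnorm h < delta ->
        Rabs (F (fun x => lam x + h x) - F lam - L h) <= eps * supnorm h.

From Stdlib Require Import Reals Lra Psatz Classical FunctionalExtensionality ClassicalEpsilon.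
From Coquelicot Require Import Coquelicot.
Open Scope R_scope.

(* The weight e^{a V + lam} is integrable for a < 0, since an Orlicz function grows at least
   linearly. Normalised, these weights form an exponential family in a: phi_V(., lam) is smooth,
   its first derivative is the mean of V and its second the variance of V, which is positive.
   The mean is thus strictly increasing in a; it is below Rad for very negative a and above Rad
   close to 0, so it crosses Rad exactly once, at alpha(lam), which is also the minimiser of the
   convex function a |-> phi_V(a, lam) - a Rad. Replacing lam by lam + h multiplies every moment
   by a factor in [e^{-|h|}, e^{|h|}]; as the variance is bounded below near alpha(lam), this
   gives alpha(lam + h) - alpha(lam) = O(|h|), and a second order expansion then yields the
   Frechet derivative h |-> E[h] - Rad Cov(V, h) / Var(V) with an O(|h|^2) remainder. *)

(** * Elementary real estimates *)

Lemma exp_le_compat x y : x <= y -> exp x <= exp y.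
Proof. intros [H| ->]; [left; apply exp_increasing; exact H | lra]. Qed.

Lemma exp_mul_exp_opp x : exp x * exp (- x) = 1.
Proof. rewrite <- exp_plus, Rplus_opp_r. apply exp_0. Qed.

Lemma pow_exp x n : exp x ^ n = exp (INR n * x).
Proof.
  induction n as [|n IH]; simpl pow.
  - rewrite Rmult_0_l, exp_0. reflexivity.
  - rewrite IH, <- exp_plus, S_INR. f_equal. ring.
Qed.

Lemma pow_le_exp k y : 0 <= y -> y ^ k <= (INR k + 1) ^ k * exp y.
Proof.
  intros Hy. pose proof (pos_INR k) as Hk.
  set (z := y / (INR k + 1)).
  assert (Hz : 0 <= z) by (unfold z; apply Rdiv_le_0_compat; lra).
  assert (Hzk : z ^ k <= exp (INR k * z)).
  { rewrite <- pow_exp. apply pow_incr. pose proof (exp_ineq1_le z). lra. }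
  assert (Hky : exp (INR k * z) <= exp y).
  { apply exp_le_compat. unfold z. apply Rmult_le_reg_r with (INR k + 1); [lra|].
    unfold Rdiv. replace (INR k * (y * / (INR k + 1)) * (INR k + 1)) with (INR k * y) by (field; lra).
    nra. }
  replace y with ((INR k + 1) * z) at 1 by (unfold z; field; lra).
  rewrite Rpow_mult_distr. apply Rmult_le_compat_l; [apply pow_le; lra | lra].
Qed.

Lemma pow_mul_exp_opp_le k t y : 0 < t -> 0 <= y ->
  y ^ k * exp (- t * y) <= (INR k + 1) ^ k / t ^ k.
Proof.
  intros Ht Hy. assert (Htk : 0 < t ^ k) by (apply pow_lt; exact Ht).
  pose proof (pow_le_exp k (t * y) ltac:(nra)) as H. rewrite Rpow_mult_distr in H.
  apply Rmult_le_reg_l with (t ^ k); [exact Htk|].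
  replace (t ^ k * ((INR k + 1) ^ k / t ^ k)) with ((INR k + 1) ^ k) by (field; lra).
  apply Rmult_le_reg_r with (exp (t * y)); [apply exp_pos|].
  replace (- t * y) with (- (t * y)) by ring.
  transitivity (t ^ k * y ^ k * (exp (t * y) * exp (- (t * y)))); [right; ring|].
  rewrite exp_mul_exp_opp, Rmult_1_r. exact H.
Qed.

Lemma exp_remainder_bounds u : 0 <= exp u - 1 - u <= u ^ 2 * exp (Rabs u).
Proof.
  pose proof (exp_ineq1_le u). pose proof (exp_ineq1_le (- u)).
  pose proof (exp_mul_exp_opp u) as E. pose proof (exp_pos u). pose proof (exp_pos (- u)).
  assert (exp u * (1 - u) <= 1) by nra.
  split; [lra|].
  destruct (Rle_dec 0 u).
  - rewrite Rabs_right by lra. nra.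
  - rewrite Rabs_left by lra.
    assert (1 <= exp (- u)) by (rewrite <- exp_0; apply exp_le_compat; lra). nra.
Qed.

Lemma taylor1_weight_le k y h a l : 0 <= y -> Rabs h <= - a / 2 ->
  y ^ k * (exp (h * y) - 1 - h * y) * exp (a * y + l) <= h ^ 2 * (y ^ S (S k) * exp (a / 2 * y + l)).
Proof.
  intros Hy Hh.
  pose proof (exp_remainder_bounds (h * y)) as [_ R2].
  rewrite Rabs_mult, (Rabs_right y) in R2 by lra.
  assert (Hexp : exp (Rabs h * y) * exp (a * y + l) <= exp (a / 2 * y + l))
    by (rewrite <- exp_plus; apply exp_le_compat; nra).
  assert (0 <= y ^ k) by (apply pow_le; exact Hy).
  pose proof (exp_pos (a * y + l)).
  assert (0 <= y ^ k * (h * y) ^ 2) by (apply Rmult_le_pos; [assumption | apply pow2_ge_0]).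
  replace (h ^ 2 * (y ^ S (S k) * exp (a / 2 * y + l))) with (y ^ k * (h * y) ^ 2 * exp (a / 2 * y + l))
    by (simpl; ring).
  apply Rle_trans with (y ^ k * (h * y) ^ 2 * (exp (Rabs h * y) * exp (a * y + l))).
  - replace (y ^ k * (h * y) ^ 2 * (exp (Rabs h * y) * exp (a * y + l)))
      with (y ^ k * ((h * y) ^ 2 * exp (Rabs h * y)) * exp (a * y + l)) by ring.
    apply Rmult_le_compat_r; [lra|]. apply Rmult_le_compat_l; assumption.
  - apply Rmult_le_compat_l; assumption.
Qed.

Lemma exp_double_sub1_le s : 0 <= s <= 1 -> exp (2 * s) - 1 <= 2 * exp 2 * s.
Proof.
  intros Hs. pose proof (exp_ineq1_le (- (2 * s))). pose proof (exp_mul_exp_opp (2 * s)).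
  pose proof (exp_pos (2 * s)). assert (exp (2 * s) <= exp 2) by (apply exp_le_compat; lra).
  assert (exp (2 * s) * (1 - 2 * s) <= 1) by nra. nra.
Qed.

Lemma exp_le_3_unit s : s <= 1 -> exp s <= 3.
Proof. intros Hs. apply Rle_trans with (exp 1); [apply exp_le_compat; lra | exact exp_le_3]. Qed.

Lemma exp_opp_ge_inv3 s : s <= 1 -> / 3 <= exp (- s).
Proof.
  intros Hs. pose proof (exp_le_3_unit s Hs). pose proof (exp_mul_exp_opp s).
  pose proof (exp_pos s). pose proof (exp_pos (- s)).
  apply Rmult_le_reg_l with 3; [lra|]. rewrite Rinv_r by lra. nra.
Qed.

Lemma one_sub_exp_opp_le x : 1 - exp (- x) <= exp x - 1.
Proof.
  pose proof (exp_mul_exp_opp x) as E. pose proof (exp_pos x). pose proof (exp_pos (- x)).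
  assert (Hsq : exp x * (exp x + exp (- x) - 2) = (exp x - 1) ^ 2)
    by (replace (exp x * (exp x + exp (- x) - 2)) with (exp x * exp x + exp x * exp (- x) - 2 * exp x) by ring;
        rewrite E; ring).
  assert (0 <= exp x + exp (- x) - 2)
    by (apply Rmult_le_reg_l with (exp x); [lra|]; rewrite Rmult_0_r, Hsq; apply pow2_ge_0).
  lra.
Qed.

Lemma ratio_shift_bounds s m0 m0' mk mk' : 0 < m0 -> 0 < m0' -> 0 <= mk ->
  exp (- s) * mk <= mk' <= exp s * mk -> exp (- s) * m0 <= m0' <= exp s * m0 ->
  exp (- (2 * s)) * (mk / m0) <= mk' / m0' <= exp (2 * s) * (mk / m0).
Proof.
  intros H0 H0' Hk [Lk Uk] [L0 U0].
  pose proof (exp_mul_exp_opp s) as Es. pose proof (exp_pos s). pose proof (exp_pos (- s)).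
  set (q := mk / m0). assert (Hq : mk = q * m0) by (unfold q; field; lra).
  assert (Hq0 : 0 <= q) by (unfold q; apply Rdiv_le_0_compat; lra).
  rewrite Hq in Lk, Uk.
  assert (C1 : m0 <= exp s * m0').
  { replace m0 with (exp s * exp (- s) * m0) at 1 by (rewrite Es; ring).
    rewrite Rmult_assoc. apply Rmult_le_compat_l; lra. }
  assert (C2 : exp (- s) * m0' <= m0).
  { replace m0 with (exp (- s) * exp s * m0) by (rewrite (Rmult_comm (exp (- s)) (exp s)), Es; ring).
    rewrite Rmult_assoc. apply Rmult_le_compat_l; lra. }
  replace (2 * s) with (s + s) by ring. rewrite exp_plus. replace (- (s + s)) with (- s + - s) by ring.
  rewrite exp_plus. split.
  - apply Rmult_le_reg_r with m0'; [lra|]. unfold Rdiv. rewrite (Rmult_assoc mk'), Rinv_l, Rmult_1_r by lra.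
    assert (exp (- s) * q * (exp (- s) * m0') <= exp (- s) * q * m0) by (apply Rmult_le_compat_l; nra).
    nra.
  - apply Rmult_le_reg_r with m0'; [lra|]. unfold Rdiv. rewrite Rmult_assoc, Rinv_l, Rmult_1_r by lra.
    assert (exp s * q * m0 <= exp s * q * (exp s * m0')) by (apply Rmult_le_compat_l; nra).
    nra.
Qed.

Lemma ratio_shift_le s m0 m0' mk mk' : 0 <= s <= 1 -> 0 < m0 -> 0 < m0' -> 0 <= mk ->
  exp (- s) * mk <= mk' <= exp s * mk -> exp (- s) * m0 <= m0' <= exp s * m0 ->
  Rabs (mk' / m0' - mk / m0) <= 2 * exp 2 * s * (mk / m0).
Proof.
  intros Hs H0 H0' Hk Bk B0.
  pose proof (ratio_shift_bounds s m0 m0' mk mk' H0 H0' Hk Bk B0) as [Lo Up].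
  assert (0 <= mk / m0) by (apply Rdiv_le_0_compat; lra).
  pose proof (exp_double_sub1_le s Hs). pose proof (one_sub_exp_opp_le (2 * s)).
  apply Rabs_le_between. split; nra.
Qed.

Lemma ln_sub_linear_le y : / 3 <= y -> Rabs (ln y - (y - 1)) <= 3 * (y - 1) ^ 2.
Proof.
  intros Hy. pose proof (exp_ineq1_le (ln y)) as H. rewrite exp_ln in H by lra.
  pose proof (exp_ineq1_le (ln (/ y))) as H'.
  rewrite exp_ln in H' by (apply Rinv_0_lt_compat; lra). rewrite ln_Rinv in H' by lra.
  assert (E : / y - 1 + (y - 1) = (y - 1) ^ 2 / y) by (field; lra).
  assert ((y - 1) ^ 2 / y <= 3 * (y - 1) ^ 2).
  { unfold Rdiv. rewrite Rmult_comm. apply Rmult_le_compat_r; [apply pow2_ge_0|].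
    rewrite <- (Rinv_inv 3). apply Rinv_le_contravar; lra. }
  apply Rabs_le_between. lra.
Qed.

Lemma Rabs_mult_le x y X Y : Rabs x <= X -> Rabs y <= Y -> Rabs (x * y) <= X * Y.
Proof. intros. rewrite Rabs_mult. apply Rmult_le_compat; auto; apply Rabs_pos. Qed.

(** * Continuous and bounded continuous functions *)

Lemma ball_of_Rabs (x y e : R) : Rabs (y - x) < e -> ball x e y.
Proof. intros H. exact H. Qed.

Lemma continuous_Rplus (f g : R -> R) x :
  continuous f x -> continuous g x -> continuous (fun y => f y + g y) x.
Proof. intros. apply (continuous_plus (V := R_NormedModule)); assumption. Qed.

Lemma continuous_Rminus (f g : R -> R) x :
  continuous f x -> continuous g x -> continuous (fun y => f y - g y) x.
Proof. intros. apply (continuous_minus (V := R_NormedModule)); assumption. Qed.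

Lemma continuous_Rmult (f g : R -> R) x :
  continuous f x -> continuous g x -> continuous (fun y => f y * g y) x.
Proof. intros. apply (continuous_mult (K := R_AbsRing)); assumption. Qed.

Lemma continuous_Rpow (f : R -> R) k x : continuous f x -> continuous (fun y => f y ^ k) x.
Proof.
  intros H. induction k as [|k IH]; simpl.
  - apply continuous_const.
  - apply continuous_Rmult; assumption.
Qed.

Lemma continuous_Rinv (f : R -> R) x : continuous f x -> f x <> 0 -> continuous (fun y => / f y) x.
Proof.
  intros Hc Hn. apply (continuous_comp f Rinv); [exact Hc|].
  apply continuity_pt_filterlim, (continuity_pt_inv (fun y => y));
    [apply continuity_pt_id | exact Hn].
Qed.

Lemma Cb_plus f g : Cb f -> Cb g -> Cb (fun x => f x + g x).
Proof.
  intros [Hf [B1 H1]] [Hg [B2 H2]]. split.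
  - intros x. apply continuous_Rplus; auto.
  - exists (B1 + B2). intros x. eapply Rle_trans; [apply Rabs_triang|].
    specialize (H1 x); specialize (H2 x). lra.
Qed.

Lemma Cb_const c : Cb (fun _ => c).
Proof. split; [intros; apply continuous_const | exists (Rabs c); intros; lra]. Qed.

Lemma supnorm_spec h : Cb h -> 0 <= supnorm h /\ forall x, Rabs (h x) <= supnorm h.
Proof.
  intros [_ [B HB]]. unfold supnorm.
  destruct (Lub_Rbar_correct (fun y => exists x, y = Rabs (h x))) as [Hub Hlub].
  destruct (Lub_Rbar (fun y => exists x, y = Rabs (h x))) as [l| |]; simpl.
  - split.
    + pose proof (Hub (Rabs (h 0)) (ex_intro _ 0 eq_refl)). simpl in *.
      pose proof (Rabs_pos (h 0)). lra.
    + intros x. exact (Hub (Rabs (h x)) (ex_intro _ x eq_refl)).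
  - exfalso. apply (Hlub (Finite B)). intros y [x ->]. apply HB.
  - exfalso. exact (Hub (Rabs (h 0)) (ex_intro _ 0 eq_refl)).
Qed.

(** * Integrals over the real line *)

Lemma ex_RInt_continuous_R (f : R -> R) a b : (forall x, continuous f x) -> ex_RInt f a b.
Proof. intros Hc. apply (@ex_RInt_continuous R_CompleteNormedModule). intros; apply Hc. Qed.

Lemma RInt_ge_const (f : R -> R) a b c : a <= b -> (forall x, continuous f x) ->
  (forall x, a <= x <= b -> c <= f x) -> c * (b - a) <= RInt f a b.
Proof.
  intros Hab Hc Hl. replace (c * (b - a)) with (RInt (fun _ => c) a b).
  - apply RInt_le; auto using ex_RInt_continuous_R, continuous_const.
    intros x Hx. apply Hl. lra.
  - rewrite RInt_const. unfold scal; simpl; unfold mult; simpl. ring.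
Qed.

Notation IntR f :=
  (@RInt_gen R_CompleteNormedModule f (Rbar_locally m_infty) (Rbar_locally p_infty)).

Definition quad_dominated (f : R -> R) : Prop :=
  (forall x, continuous f x) /\ exists K, forall x, Rabs (f x) <= K / (1 + x ^ 2).

Lemma one_plus_sq_pos x : 0 < 1 + x ^ 2.
Proof. nra. Qed.

Lemma continuous_quad_decay K x : continuous (fun x => K / (1 + x ^ 2)) x.
Proof.
  apply continuous_Rmult; [apply continuous_const|].
  apply continuous_Rinv; [|pose proof (one_plus_sq_pos x); lra].
  apply continuous_Rplus; [apply continuous_const | apply continuous_Rpow, continuous_id].
Qed.

Lemma RInt_quad_decay_le K a b : 0 <= K -> a <= b -> RInt (fun x => K / (1 + x ^ 2)) a b <= K * PI.
Proof.
  intros HK Hab.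
  assert (H : is_RInt (fun x => K / (1 + x ^ 2)) a b (K * atan b - K * atan a)).
  { apply (@is_RInt_derive R_CompleteNormedModule (fun x => K * atan x)).
    - intros x _. replace (K / (1 + x ^ 2)) with (K * / (1 + x²)) by (unfold Rsqr, Rdiv; f_equal; f_equal; ring).
      apply (is_derive_scal (fun x => atan x)). apply is_derive_atan.
    - intros x _. apply continuous_quad_decay. }
  rewrite (is_RInt_unique _ _ _ _ H).
  pose proof (atan_bound a). pose proof (atan_bound b). nra.
Qed.

Lemma is_RInt_gen_nonneg_bounded (f : R -> R) (M : R) :
  (forall x, continuous f x) -> (forall x, 0 <= f x) ->
  (forall a b, a <= b -> RInt f a b <= M) ->
  exists L, is_RInt_gen f (Rbar_locally m_infty) (Rbar_locally p_infty) L /\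
    (forall a b, a <= b -> RInt f a b <= L).
Proof.
  intros Hc Hp Hb.
  pose proof (fun a b => ex_RInt_continuous_R f a b Hc) as Hex.
  set (E := fun y => exists a b, a <= b /\ y = RInt f a b).
  destruct (completeness E) as [L [HL1 HL2]].
  { exists M. intros y [a [b [Hab ->]]]. now apply Hb. }
  { exists (RInt f 0 0), 0, 0. split; [lra | reflexivity]. }
  assert (HLb : forall a b, a <= b -> RInt f a b <= L) by (intros a b Hab; apply HL1; exists a, b; auto).
  exists L. split; [|exact HLb].
  intros P [eps HP].
  assert (Hlt : exists a0 b0, a0 <= b0 /\ L - eps < RInt f a0 b0).
  { apply not_all_not_ex. intros H.
    assert (L <= L - eps); [|destruct eps; simpl in *; lra].
    apply HL2. intros y [a [b [Hab ->]]]. apply Rnot_lt_le. intros Hlt.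
    apply (H a). exists b. auto. }
  destruct Hlt as [a0 [b0 [Hab0 Hl]]].
  apply Filter_prod with (Q := fun a => a < a0) (R := fun b => b0 < b);
    [exists a0; auto | exists b0; auto|].
  intros a b Ha Hb'. exists (RInt f a b). split.
  - apply (@RInt_correct R_CompleteNormedModule), Hex.
  - apply HP, ball_of_Rabs.
    assert (H1 : RInt f a b = RInt f a a0 + RInt f a0 b0 + RInt f b0 b).
    { pose proof (@RInt_Chasles R_CompleteNormedModule f a0 b0 b (Hex _ _) (Hex _ _)).
      pose proof (@RInt_Chasles R_CompleteNormedModule f a a0 b (Hex _ _) (Hex _ _)).
      unfold plus in *; simpl in *. lra. }
    assert (0 <= RInt f a a0) by (apply RInt_ge_0; auto; lra).
    assert (0 <= RInt f b0 b) by (apply RInt_ge_0; auto; lra).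
    assert (RInt f a b <= L) by (apply HLb; lra).
    apply Rabs_lt_between. lra.
Qed.

Lemma quad_dominated_nonneg_const f : quad_dominated f ->
  exists K, 0 <= K /\ forall x, Rabs (f x) <= K / (1 + x ^ 2).
Proof.
  intros [_ [K HK]]. exists K. split; [|exact HK].
  pose proof (HK 0). pose proof (Rabs_pos (f 0)). replace (1 + 0 ^ 2) with 1 in * by ring. lra.
Qed.

Lemma IntR_nonneg_spec f : quad_dominated f -> (forall x, 0 <= f x) ->
  is_RInt_gen f (Rbar_locally m_infty) (Rbar_locally p_infty) (IntR f) /\
  (forall a b, a <= b -> RInt f a b <= IntR f).
Proof.
  intros Hd Hp. destruct (quad_dominated_nonneg_const f Hd) as [K [HK HKb]].
  destruct (is_RInt_gen_nonneg_bounded f (K * PI)) as [L [HL1 HL2]]; [apply Hd | exact Hp | |].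
  { intros a b Hab. eapply Rle_trans; [|apply (RInt_quad_decay_le K a b HK Hab)].
    apply RInt_le; auto using ex_RInt_continuous_R, continuous_quad_decay; [apply ex_RInt_continuous_R, Hd|].
    intros x _. eapply Rle_trans; [apply Rle_abs | apply HKb]. }
  rewrite (is_RInt_gen_unique _ _ HL1). auto.
Qed.

Lemma quad_dominated_plus f g : quad_dominated f -> quad_dominated g ->
  quad_dominated (fun x => f x + g x).
Proof.
  intros [Hf [K1 H1]] [Hg [K2 H2]]. split; [intros; apply continuous_Rplus; auto|].
  exists (K1 + K2). intros x. eapply Rle_trans; [apply Rabs_triang|].
  pose proof (H1 x); pose proof (H2 x). unfold Rdiv in *. lra.
Qed.

Lemma quad_dominated_scal c f : quad_dominated f -> quad_dominated (fun x => c * f x).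
Proof.
  intros [Hf [K HK]]. split; [intros; apply continuous_Rmult; auto using continuous_const|].
  exists (Rabs c * K). intros x. rewrite Rabs_mult.
  unfold Rdiv. rewrite Rmult_assoc. apply Rmult_le_compat_l; [apply Rabs_pos | apply HK].
Qed.

Lemma quad_dominated_ext f g : quad_dominated f -> (forall x, f x = g x) -> quad_dominated g.
Proof. intros H E. replace g with f; [exact H | apply functional_extensionality; exact E]. Qed.

Lemma quad_dominated_minus f g : quad_dominated f -> quad_dominated g ->
  quad_dominated (fun x => f x - g x).
Proof.
  intros Hf Hg. apply (quad_dominated_ext _ _ (quad_dominated_plus _ _ Hf (quad_dominated_scal (-1) _ Hg))).
  intros x. ring.
Qed.

Lemma IntR_correct f : quad_dominated f ->
  is_RInt_gen f (Rbar_locally m_infty) (Rbar_locally p_infty) (IntR f).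
Proof.
  intros Hd. destruct (quad_dominated_nonneg_const f Hd) as [K [HK HKb]].
  set (g := fun x => K / (1 + x ^ 2)).
  assert (Hg0 : forall x, 0 <= g x) by (intros x; apply Rdiv_le_0_compat; [exact HK | apply one_plus_sq_pos]).
  assert (Hg : quad_dominated g).
  { split; [intros; apply continuous_quad_decay|].
    exists K. intros x. rewrite Rabs_right by (apply Rle_ge, Hg0). apply Rle_refl. }
  assert (Hfg0 : forall x, 0 <= f x + g x).
  { intros x. pose proof (HKb x) as H. apply Rabs_le_between in H. unfold g. lra. }
  destruct (IntR_nonneg_spec _ (quad_dominated_plus _ _ Hd Hg) Hfg0) as [H1 _].
  destruct (IntR_nonneg_spec _ Hg Hg0) as [H2 _].
  pose proof (is_RInt_gen_minus _ _ _ _ H1 H2) as H3.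
  apply (is_RInt_gen_ext _ f) in H3.
  - rewrite (is_RInt_gen_unique _ _ H3). exact H3.
  - apply filter_forall. intros ab x _. unfold minus, plus, opp; simpl. ring.
Qed.

Lemma IntR_unique f l :
  is_RInt_gen f (Rbar_locally m_infty) (Rbar_locally p_infty) l -> IntR f = l.
Proof. intros H. exact (@is_RInt_gen_unique R_CompleteNormedModule _ _ _ _ _ _ H). Qed.

Lemma IntR_ext (f g : R -> R) : (forall x, f x = g x) -> IntR f = IntR g.
Proof. intros H. f_equal. apply functional_extensionality. exact H. Qed.

Lemma IntR_plus f g : quad_dominated f -> quad_dominated g ->
  IntR (fun x => f x + g x) = IntR f + IntR g.
Proof. intros Hf Hg. apply IntR_unique, (is_RInt_gen_plus f g); apply IntR_correct; assumption. Qed.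

Lemma IntR_scal c f : quad_dominated f -> IntR (fun x => c * f x) = c * IntR f.
Proof. intros Hf. apply IntR_unique, (is_RInt_gen_scal f c), IntR_correct, Hf. Qed.

Lemma IntR_minus f g : quad_dominated f -> quad_dominated g ->
  IntR (fun x => f x - g x) = IntR f - IntR g.
Proof. intros Hf Hg. apply IntR_unique, (is_RInt_gen_minus f g); apply IntR_correct; assumption. Qed.

Lemma RInt_le_IntR f a b : quad_dominated f -> (forall x, 0 <= f x) -> a <= b -> RInt f a b <= IntR f.
Proof. intros Hf Hp. apply (IntR_nonneg_spec f Hf Hp). Qed.

Lemma IntR_ge0 f : quad_dominated f -> (forall x, 0 <= f x) -> 0 <= IntR f.
Proof.
  intros Hf Hp. eapply Rle_trans; [|apply (RInt_le_IntR f 0 0 Hf Hp); lra].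
  rewrite RInt_point. apply Rle_refl.
Qed.

Lemma IntR_le f g : quad_dominated f -> quad_dominated g -> (forall x, f x <= g x) -> IntR f <= IntR g.
Proof.
  intros Hf Hg Hle.
  pose proof (IntR_ge0 (fun x => g x - f x) (quad_dominated_minus _ _ Hg Hf)) as H.
  rewrite IntR_minus in H by assumption.
  enough (0 <= IntR g - IntR f) by lra. apply H. intros x. specialize (Hle x). lra.
Qed.

Lemma IntR_gt0 f x0 : quad_dominated f -> (forall x, 0 <= f x) -> 0 < f x0 -> 0 < IntR f.
Proof.
  intros Hd Hp Hx0.
  assert (He : 0 < f x0 / 2) by lra.
  destruct (proj1 (filterlim_locally (F := locally x0) f (f x0)) (proj1 Hd x0) (mkposreal _ He))
    as [d Hball].
  pose proof (cond_pos d).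
  apply Rlt_le_trans with ((f x0 / 2) * ((x0 + d / 2) - (x0 - d / 2))); [apply Rmult_lt_0_compat; lra|].
  eapply Rle_trans; [apply RInt_ge_const; [lra | apply Hd |] | apply RInt_le_IntR; auto; lra].
  intros x Hx. assert (Hxd : ball x0 d x) by (apply ball_of_Rabs, Rabs_lt_between; lra).
  specialize (Hball x Hxd). change (Rabs (f x - f x0) < f x0 / 2) in Hball.
  apply Rabs_lt_between in Hball. lra.
Qed.

(** * Convex and Orlicz functions *)

Definition convex_fun (f : R -> R) : Prop :=
  forall x y t, 0 <= t <= 1 -> f (t * x + (1 - t) * y) <= t * f x + (1 - t) * f y.

Lemma convex_step_bound f x t : convex_fun f -> 0 <= t <= 1 ->
  Rabs (f (x + t) - f x) <= t * (Rabs (f (x + 1) - f x) + Rabs (f (x - 1) - f x)).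
Proof.
  intros Hf Ht.
  assert (Hup : f (x + t) <= t * f (x + 1) + (1 - t) * f x).
  { replace (x + t) with (t * (x + 1) + (1 - t) * x) by ring. apply Hf, Ht. }
  (* x is the convex combination of x + t and x - 1 with weights 1/(1+t), t/(1+t) *)
  assert (Hlow : (1 + t) * f x <= f (x + t) + t * f (x - 1)).
  { assert (H : f x <= / (1 + t) * f (x + t) + (1 - / (1 + t)) * f (x - 1)).
    { replace x with (/ (1 + t) * (x + t) + (1 - / (1 + t)) * (x - 1)) at 1 by (field; lra).
      apply Hf. split; [left; apply Rinv_0_lt_compat; lra|].
      rewrite <- Rinv_1. apply Rinv_le_contravar; lra. }
    apply Rmult_le_compat_l with (r := 1 + t) in H; [|lra].
    replace ((1 + t) * (/ (1 + t) * f (x + t) + (1 - / (1 + t)) * f (x - 1)))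
      with (f (x + t) + t * f (x - 1)) in H by (field; lra).
    exact H. }
  set (A := Rabs (f (x + 1) - f x)). set (B := Rabs (f (x - 1) - f x)).
  assert (t * (f (x + 1) - f x) <= t * A) by (apply Rmult_le_compat_l; [lra | apply Rle_abs]).
  assert (t * (f (x - 1) - f x) <= t * B) by (apply Rmult_le_compat_l; [lra | apply Rle_abs]).
  assert (0 <= t * A) by (apply Rmult_le_pos; [lra | apply Rabs_pos]).
  assert (0 <= t * B) by (apply Rmult_le_pos; [lra | apply Rabs_pos]).
  apply Rabs_le_between. split; lra.
Qed.

Lemma convex_local_lipschitz f x y : convex_fun f -> Rabs (y - x) <= 1 ->
  Rabs (f y - f x) <= Rabs (y - x) * (Rabs (f (x + 1) - f x) + Rabs (f (x - 1) - f x)).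
Proof.
  intros Hf Hd. apply Rabs_le_between in Hd.
  destruct (Rle_dec x y) as [Hxy|Hxy].
  - rewrite (Rabs_pos_eq (y - x)) by lra.
    replace y with (x + (y - x)) at 1 by ring. apply convex_step_bound; [exact Hf | lra].
  - (* the case y < x is the case y > x for z |-> f (- z) *)
    assert (Hg : convex_fun (fun z => f (- z))).
    { intros u w t Ht. replace (- (t * u + (1 - t) * w)) with (t * - u + (1 - t) * - w) by ring.
      apply Hf, Ht. }
    pose proof (convex_step_bound _ (- x) (x - y) Hg ltac:(lra)) as H. cbv beta in H.
    replace (- (- x + (x - y))) with y in H by ring. rewrite Ropp_involutive in H.
    replace (- (- x + 1)) with (x - 1) in H by ring. replace (- (- x - 1)) with (x + 1) in H by ring.
    rewrite (Rabs_left (y - x)) by lra. lra.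
Qed.

Lemma convex_continuous f x : convex_fun f -> continuous f x.
Proof.
  intros Hf. apply filterlim_locally. intros eps.
  set (D := Rabs (f (x + 1) - f x) + Rabs (f (x - 1) - f x) + 1).
  assert (HD : 0 < D) by (unfold D; pose proof (Rabs_pos (f (x + 1) - f x));
                          pose proof (Rabs_pos (f (x - 1) - f x)); lra).
  assert (Hd : 0 < Rmin 1 (eps / D)) by (apply Rmin_pos; [lra | apply Rdiv_lt_0_compat; [apply cond_pos | exact HD]]).
  exists (mkposreal _ Hd). intros y Hy. change (Rabs (y - x) < Rmin 1 (eps / D)) in Hy.
  apply ball_of_Rabs.
  pose proof (Rmin_l 1 (eps / D)). pose proof (Rmin_r 1 (eps / D)).
  eapply Rle_lt_trans; [apply (convex_local_lipschitz f x y Hf); lra|].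
  apply Rle_lt_trans with (Rabs (y - x) * D); [apply Rmult_le_compat_l; [apply Rabs_pos | unfold D; lra]|].
  apply Rlt_le_trans with (eps / D * D); [apply Rmult_lt_compat_r; lra | right; field; lra].
Qed.

Section Orlicz.
Variable V : R -> R.
Hypothesis hV : Orlicz V.

Lemma Orlicz_convex : convex_fun V.
Proof. exact (proj1 hV). Qed.
Lemma Orlicz_sym x : V (- x) = V x.
Proof. apply hV. Qed.
Lemma Orlicz_zero : V 0 = 0.
Proof. apply hV. Qed.
Lemma Orlicz_ge0 x : 0 <= V x.
Proof. apply hV. Qed.
Lemma Orlicz_gt0 x : x <> 0 -> 0 < V x.
Proof. apply hV. Qed.

Lemma Orlicz_abs x : V (Rabs x) = V x.
Proof. unfold Rabs. destruct (Rcase_abs x); [apply Orlicz_sym | reflexivity]. Qed.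

Lemma Orlicz_continuous x : continuous V x.
Proof. apply convex_continuous, Orlicz_convex. Qed.

Lemma Orlicz_le_scale x t : 0 <= t <= 1 -> V (t * x) <= t * V x.
Proof.
  intros Ht. replace (t * x) with (t * x + (1 - t) * 0) by ring.
  eapply Rle_trans; [apply Orlicz_convex, Ht|]. rewrite Orlicz_zero. lra.
Qed.

Lemma Orlicz_ge_linear x : V 1 * Rabs x - V 1 <= V x.
Proof.
  pose proof (Orlicz_ge0 x). pose proof (Orlicz_ge0 1).
  destruct (Rle_dec 1 (Rabs x)) as [Hx|Hx]; [|nra].
  pose proof (Orlicz_le_scale (Rabs x) (/ Rabs x)) as Hs.
  rewrite Rinv_l in Hs by lra. rewrite Orlicz_abs in Hs.
  assert (Hs' : V 1 <= / Rabs x * V x).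
  { apply Hs. split; [left; apply Rinv_0_lt_compat; lra|]. rewrite <- Rinv_1. apply Rinv_le_contravar; lra. }
  apply Rmult_le_compat_l with (r := Rabs x) in Hs'; [|lra].
  rewrite <- Rmult_assoc, Rinv_r, Rmult_1_l in Hs' by lra. nra.
Qed.

Lemma Orlicz_le_linear x : Rabs x <= 1 -> V x <= V 1 * Rabs x.
Proof.
  intros H. rewrite <- Orlicz_abs. rewrite Rmult_comm.
  replace (Rabs x) with (Rabs x * 1) at 1 by ring.
  apply Orlicz_le_scale. pose proof (Rabs_pos x). lra.
Qed.

Lemma Orlicz_le_of_abs_le n x : Rabs x <= n -> V x <= V n.
Proof.
  intros H. rewrite <- Orlicz_abs. pose proof (Rabs_pos x).
  destruct (Req_dec n 0) as [->|Hn]; [replace (Rabs x) with 0 by lra; lra|].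
  replace (Rabs x) with (Rabs x / n * n) by (field; exact Hn).
  eapply Rle_trans; [apply Orlicz_le_scale|].
  - split; [apply Rdiv_le_0_compat; lra|].
    apply Rmult_le_reg_r with n; [lra|]. unfold Rdiv. rewrite Rmult_assoc, Rinv_l; lra.
  - assert (Rabs x / n <= 1) by (apply Rmult_le_reg_r with n; [lra|]; unfold Rdiv; rewrite Rmult_assoc, Rinv_l; lra).
    pose proof (Orlicz_ge0 n). nra.
Qed.

(* Half of e^{aV} absorbs the polynomial factor V^k, the other half decays like
   e^{-c|x|} by the linear lower bound on V. *)
Lemma Orlicz_weight_decay a k : a < 0 ->
  exists K, forall x, V x ^ k * exp (a * V x) <= K / (1 + x ^ 2).
Proof.
  intros Ha. set (t := - a / 2). assert (Ht : 0 < t) by (unfold t; lra).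
  set (c := V 1). assert (Hc : 0 < c) by (apply Orlicz_gt0; lra).
  set (u := t * c). assert (Hu : 0 < u) by (unfold u; nra).
  set (Ck := (INR k + 1) ^ k / t ^ k).
  exists (Ck * exp (t * c) * (1 + 9 / u ^ 2)). intros x.
  pose proof (one_plus_sq_pos x). pose proof (Orlicz_ge0 x).
  assert (HA : V x ^ k * exp (- t * V x) <= Ck) by (apply pow_mul_exp_opp_le; assumption).
  assert (HB : exp (- t * V x) <= exp (t * c) * exp (- u * Rabs x)).
  { rewrite <- exp_plus. apply exp_le_compat. pose proof (Orlicz_ge_linear x) as Hlin. fold c in Hlin. unfold u. nra. }
  assert (HC : (1 + x ^ 2) * exp (- u * Rabs x) <= 1 + 9 / u ^ 2).
  { pose proof (pow_mul_exp_opp_le 2 u (Rabs x) Hu (Rabs_pos x)) as H2.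
    rewrite pow2_abs in H2. replace ((INR 2 + 1) ^ 2) with 9 in H2 by (simpl; ring).
    assert (exp (- u * Rabs x) <= 1).
    { rewrite <- exp_0. apply exp_le_compat. pose proof (Rabs_pos x). nra. }
    lra. }
  pose proof (exp_pos (- t * V x)). pose proof (exp_pos (t * c)). pose proof (exp_pos (- u * Rabs x)).
  assert (0 <= V x ^ k) by (apply pow_le; assumption).
  assert (0 <= Ck) by (eapply Rle_trans; [|exact HA]; apply Rmult_le_pos; lra).
  replace (a * V x) with (- t * V x + - t * V x) by (unfold t; field). rewrite exp_plus.
  apply Rmult_le_reg_l with (1 + x ^ 2); [assumption|].
  replace ((1 + x ^ 2) * (Ck * exp (t * c) * (1 + 9 / u ^ 2) / (1 + x ^ 2)))
    with (Ck * exp (t * c) * (1 + 9 / u ^ 2)) by (field; lra).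
  apply Rle_trans with ((1 + x ^ 2) * (Ck * (exp (t * c) * exp (- u * Rabs x)))).
  { replace (V x ^ k * (exp (- t * V x) * exp (- t * V x)))
      with ((V x ^ k * exp (- t * V x)) * exp (- t * V x)) by ring.
    apply Rmult_le_compat_l; [lra|]. apply Rmult_le_compat; nra. }
  replace ((1 + x ^ 2) * (Ck * (exp (t * c) * exp (- u * Rabs x))))
    with (Ck * exp (t * c) * ((1 + x ^ 2) * exp (- u * Rabs x))) by ring.
  apply Rmult_le_compat_l; [nra | exact HC].
Qed.

Lemma gibbs_integrand_dominated k a (lam u : R -> R) : Cb lam -> Cb u -> a < 0 ->
  quad_dominated (fun x => V x ^ k * u x * exp (a * V x + lam x)).
Proof.
  intros [Hlc [B Hlb]] [Huc [U Hub]] Ha. destruct (Orlicz_weight_decay a k Ha) as [K HK].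
  split.
  - intros x. apply continuous_Rmult; [apply continuous_Rmult; [apply continuous_Rpow, Orlicz_continuous | apply Huc]|].
    apply continuous_exp_comp, continuous_Rplus; [|apply Hlc].
    apply continuous_Rmult; [apply continuous_const | apply Orlicz_continuous].
  - exists (U * exp B * K). intros x.
    pose proof (Hub x). pose proof (Hlb x) as Hl. pose proof (HK x). pose proof (Rabs_pos (u x)).
    rewrite !Rabs_mult, (Rabs_right (exp _)) by (left; apply exp_pos).
    rewrite exp_plus, <- RPow_abs, (Rabs_right (V x)) by (apply Rle_ge, Orlicz_ge0).
    assert (exp (lam x) <= exp B) by (apply exp_le_compat; apply Rabs_le_between in Hl; lra).
    pose proof (exp_pos (lam x)). pose proof (exp_pos (a * V x)).
    assert (0 <= V x ^ k) by (apply pow_le, Orlicz_ge0).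
    replace (V x ^ k * Rabs (u x) * (exp (a * V x) * exp (lam x)))
      with (Rabs (u x) * exp (lam x) * (V x ^ k * exp (a * V x))) by ring.
    replace (U * exp B * K / (1 + x ^ 2)) with ((U * exp B) * (K / (1 + x ^ 2))) by (unfold Rdiv; ring).
    apply Rmult_le_compat; [nra | nra | apply Rmult_le_compat; lra | lra].
Qed.

End Orlicz.

(** * The Gibbs family *)

Lemma is_derive_eq (f : R -> R) x l l' : is_derive f x l -> l = l' -> is_derive f x l'.
Proof. intros H <-. exact H. Qed.

Lemma is_derive_ln_comp (f : R -> R) x df : is_derive f x df -> 0 < f x ->
  is_derive (fun y => ln (f y)) x (df / f x).
Proof.
  intros H Hp. eapply is_derive_eq; [apply (is_derive_comp ln f); [apply is_derive_ln, Hp | exact H]|].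
  unfold scal; simpl; unfold mult; simpl. unfold Rdiv. ring.
Qed.

Lemma continuity_pt_of_is_derive (f : R -> R) x l : is_derive f x l -> continuity_pt f x.
Proof.
  intros H. apply continuity_pt_filterlim.
  apply (ex_derive_continuous (K := R_AbsRing) (V := R_NormedModule)). exists l. exact H.
Qed.

Section GibbsMoments.
Variable V : R -> R.
Hypothesis hV : Orlicz V.

Definition moment k a (lam : R -> R) : R := IntR (fun x => V x ^ k * exp (a * V x + lam x)).

Lemma moment_integrand_dominated k a lam : Cb lam -> a < 0 ->
  quad_dominated (fun x => V x ^ k * exp (a * V x + lam x)).
Proof.
  intros Hl Ha. apply (quad_dominated_ext _ _ (gibbs_integrand_dominated V hV k a lam _ Hl (Cb_const 1) Ha)).
  intros x. ring.
Qed.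

Lemma moment_integrand_ge0 k a lam x : 0 <= V x ^ k * exp (a * V x + lam x).
Proof. apply Rmult_le_pos; [apply pow_le, (Orlicz_ge0 V hV) | left; apply exp_pos]. Qed.

Lemma moment_ge0 k a lam : Cb lam -> a < 0 -> 0 <= moment k a lam.
Proof.
  intros Hl Ha. apply IntR_ge0; [apply moment_integrand_dominated; assumption|].
  intros x. apply moment_integrand_ge0.
Qed.

Lemma moment0_gt0 a lam : Cb lam -> a < 0 -> 0 < moment 0 a lam.
Proof.
  intros Hl Ha. apply (IntR_gt0 _ 0); [apply moment_integrand_dominated; assumption | apply moment_integrand_ge0|].
  simpl. rewrite Rmult_1_l. apply exp_pos.
Qed.

Lemma moment1_gt0 a lam : Cb lam -> a < 0 -> 0 < moment 1 a lam.
Proof.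
  intros Hl Ha. apply (IntR_gt0 _ 1); [apply moment_integrand_dominated; assumption | apply moment_integrand_ge0|].
  simpl. rewrite Rmult_1_r. apply Rmult_lt_0_compat; [apply (Orlicz_gt0 V hV); lra | apply exp_pos].
Qed.

Lemma moment_le_compat k a b lam : Cb lam -> a <= b -> b < 0 -> moment k a lam <= moment k b lam.
Proof.
  intros Hl Hab Hb. apply IntR_le; try (apply moment_integrand_dominated; auto; lra).
  intros x. apply Rmult_le_compat_l; [apply pow_le, (Orlicz_ge0 V hV)|].
  apply exp_le_compat. pose proof (Orlicz_ge0 V hV x). nra.
Qed.

Lemma moment_taylor1 k a h lam : Cb lam -> a < 0 -> Rabs h <= - a / 2 ->
  0 <= moment k (a + h) lam - moment k a lam - h * moment (S k) a lam
    <= h ^ 2 * moment (S (S k)) (a / 2) lam.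
Proof.
  intros Hl Ha Hh.
  assert (Hah : a + h < 0) by (apply Rabs_le_between in Hh; lra).
  pose proof (moment_integrand_dominated k (a + h) lam Hl Hah) as Dah.
  pose proof (moment_integrand_dominated k a lam Hl Ha) as Da.
  pose proof (quad_dominated_scal h _ (moment_integrand_dominated (S k) a lam Hl Ha)) as DSk.
  set (r := fun x => V x ^ k * (exp (h * V x) - 1 - h * V x) * exp (a * V x + lam x)).
  assert (Er : forall x, V x ^ k * exp ((a + h) * V x + lam x) - V x ^ k * exp (a * V x + lam x)
                        - h * (V x ^ S k * exp (a * V x + lam x)) = r x).
  { intros x. unfold r. replace ((a + h) * V x + lam x) with (h * V x + (a * V x + lam x)) by ring.
    rewrite exp_plus. simpl. ring. }
  pose proof (quad_dominated_ext _ _ (quad_dominated_minus _ _ (quad_dominated_minus _ _ Dah Da) DSk) Er) as Hr.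
  assert (E : moment k (a + h) lam - moment k a lam - h * moment (S k) a lam = IntR r).
  { unfold moment. rewrite <- (IntR_scal h _ (moment_integrand_dominated (S k) a lam Hl Ha)).
    rewrite <- (IntR_minus _ _ Dah Da), <- (IntR_minus _ _ (quad_dominated_minus _ _ Dah Da) DSk).
    apply IntR_ext, Er. }
  rewrite E. split.
  - apply IntR_ge0; [exact Hr|]. intros x. unfold r.
    apply Rmult_le_pos; [apply Rmult_le_pos|left; apply exp_pos].
    + apply pow_le, (Orlicz_ge0 V hV).
    + apply exp_remainder_bounds.
  - unfold moment. rewrite <- IntR_scal by (apply moment_integrand_dominated; auto; lra).
    apply IntR_le; [exact Hr | apply quad_dominated_scal, moment_integrand_dominated; auto; lra|].
    intros x. apply taylor1_weight_le; [apply (Orlicz_ge0 V hV) | exact Hh].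
Qed.

Lemma is_derive_moment k a lam : Cb lam -> a < 0 ->
  is_derive (fun b => moment k b lam) a (moment (S k) a lam).
Proof.
  intros Hl Ha. apply is_derive_Reals. intros eps Heps.
  set (C := moment (S (S k)) (a / 2) lam). assert (HC : 0 <= C) by (apply moment_ge0; auto; lra).
  assert (Hd : 0 < Rmin (- a / 2) (eps / (C + 1))) by (apply Rmin_pos; [lra | apply Rdiv_lt_0_compat; lra]).
  exists (mkposreal _ Hd). intros h Hh0 Hh. simpl in Hh.
  pose proof (Rmin_l (- a / 2) (eps / (C + 1))). pose proof (Rmin_r (- a / 2) (eps / (C + 1))).
  destruct (moment_taylor1 k a h lam Hl Ha ltac:(lra)) as [R1 R2]. fold C in R2.
  assert (Hhp : 0 < Rabs h) by (apply Rabs_pos_lt; exact Hh0).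
  replace ((moment k (a + h) lam - moment k a lam) / h - moment (S k) a lam)
    with ((moment k (a + h) lam - moment k a lam - h * moment (S k) a lam) / h) by (field; exact Hh0).
  unfold Rdiv. rewrite Rabs_mult, Rabs_inv, Rabs_right by lra.
  apply Rmult_lt_reg_r with (Rabs h); [exact Hhp|]. rewrite Rmult_assoc, Rinv_l by lra.
  assert (h ^ 2 = Rabs h * Rabs h) by (rewrite <- pow2_abs; ring).
  assert (Rabs h * (C + 1) < eps).
  { apply Rlt_le_trans with (eps / (C + 1) * (C + 1)); [apply Rmult_lt_compat_r; lra | right; field; lra]. }
  nra.
Qed.

(* Moments of V under the probability density e^{a V + lam} / moment 0 a lam. *)
Definition nmoment k a lam := moment k a lam / moment 0 a lam.
Definition gmean a lam := nmoment 1 a lam.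
Definition gvar a lam := nmoment 2 a lam - nmoment 1 a lam ^ 2.

Lemma nmoment0 a lam : Cb lam -> a < 0 -> nmoment 0 a lam = 1.
Proof. intros Hl Ha. unfold nmoment. field. pose proof (moment0_gt0 a lam Hl Ha). lra. Qed.

Lemma nmoment_ge0 k a lam : Cb lam -> a < 0 -> 0 <= nmoment k a lam.
Proof. intros. apply Rdiv_le_0_compat; [apply moment_ge0 | apply moment0_gt0]; assumption. Qed.

Lemma gmean_gt0 a lam : Cb lam -> a < 0 -> 0 < gmean a lam.
Proof. intros. apply Rdiv_lt_0_compat; [apply moment1_gt0 | apply moment0_gt0]; assumption. Qed.

Lemma is_derive_nmoment k a lam : Cb lam -> a < 0 ->
  is_derive (fun b => nmoment k b lam) a (nmoment (S k) a lam - nmoment k a lam * nmoment 1 a lam).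
Proof.
  intros Hl Ha. pose proof (moment0_gt0 a lam Hl Ha).
  eapply is_derive_eq; [apply is_derive_div; [apply is_derive_moment; auto | apply is_derive_moment; auto | lra]|].
  unfold nmoment. cbv beta. match goal with |- ?A = ?B => change (@eq R A B) end. field. lra.
Qed.

Lemma is_derive_gmean a lam : Cb lam -> a < 0 -> is_derive (fun b => gmean b lam) a (gvar a lam).
Proof. intros. eapply is_derive_eq; [apply (is_derive_nmoment 1); assumption | unfold gvar; simpl; ring]. Qed.

Lemma gvar_gt0 a lam : Cb lam -> a < 0 -> 0 < gvar a lam.
Proof.
  intros Hl Ha. pose proof (moment0_gt0 a lam Hl Ha) as H0.
  set (m := gmean a lam). assert (Hm : 0 < m) by (apply gmean_gt0; auto).
  pose proof (moment_integrand_dominated 0 a lam Hl Ha) as D0.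
  pose proof (moment_integrand_dominated 1 a lam Hl Ha) as D1.
  pose proof (moment_integrand_dominated 2 a lam Hl Ha) as D2.
  assert (D : quad_dominated (fun x => (V x - m) ^ 2 * exp (a * V x + lam x))).
  { apply (quad_dominated_ext _ _ (quad_dominated_plus _ _
      (quad_dominated_minus _ _ D2 (quad_dominated_scal (2 * m) _ D1)) (quad_dominated_scal (m ^ 2) _ D0))).
    intros x. simpl. ring. }
  assert (E : IntR (fun x => (V x - m) ^ 2 * exp (a * V x + lam x))
              = moment 2 a lam - 2 * m * moment 1 a lam + m ^ 2 * moment 0 a lam).
  { unfold moment. rewrite <- !IntR_scal, <- IntR_minus, <- IntR_plus;
      auto using quad_dominated_scal, quad_dominated_minus.
    apply IntR_ext. intros x. simpl. ring. }
  (* the centred second moment is positive: its integrand is m^2 e^{lam 0} > 0 at x = 0 *)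
  assert (P : 0 < IntR (fun x => (V x - m) ^ 2 * exp (a * V x + lam x))).
  { apply (IntR_gt0 _ 0 D).
    - intros x. apply Rmult_le_pos; [apply pow2_ge_0 | left; apply exp_pos].
    - rewrite (Orlicz_zero V hV). apply Rmult_lt_0_compat; [nra | apply exp_pos]. }
  rewrite E in P. unfold gvar, nmoment. unfold m, gmean, nmoment in P.
  replace (moment 2 a lam / moment 0 a lam - (moment 1 a lam / moment 0 a lam) ^ 2) with
    ((moment 2 a lam - 2 * (moment 1 a lam / moment 0 a lam) * moment 1 a lam
      + (moment 1 a lam / moment 0 a lam) ^ 2 * moment 0 a lam) / moment 0 a lam) by (field; lra).
  apply Rdiv_lt_0_compat; assumption.
Qed.

Lemma gmean_lt a b lam : Cb lam -> a < b -> b < 0 -> gmean a lam < gmean b lam.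
Proof.
  intros Hl Hab Hb.
  destruct (MVT_cor2 (fun x => gmean x lam) (fun x => gvar x lam) a b Hab) as [c [Ec Hc]].
  { intros c Hc. apply is_derive_Reals, is_derive_gmean; auto. lra. }
  pose proof (gvar_gt0 c lam Hl ltac:(lra)). nra.
Qed.

Lemma gmean_le a b lam : Cb lam -> a <= b -> b < 0 -> gmean a lam <= gmean b lam.
Proof. intros Hl [Hab| ->] Hb; [left; apply gmean_lt | right]; auto. Qed.

Lemma phiV_eq_ln_moment a lam : phiV V a lam = ln (moment 0 a lam).
Proof. unfold phiV, moment. f_equal. apply IntR_ext. intros x. simpl. ring. Qed.

Lemma is_derive_phiV a lam : Cb lam -> a < 0 -> is_derive (fun b => phiV V b lam) a (gmean a lam).
Proof.
  intros Hl Ha. apply (is_derive_ext (fun b => ln (moment 0 b lam))); [intros t; symmetry; apply phiV_eq_ln_moment|].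
  apply is_derive_ln_comp; [apply is_derive_moment | apply moment0_gt0]; assumption.
Qed.

Lemma is_derive_Derive_phiV a lam : Cb lam -> a < 0 ->
  is_derive (Derive (fun b => phiV V b lam)) a (gvar a lam).
Proof.
  intros Hl Ha. apply (is_derive_ext_loc (fun b => gmean b lam)); [|apply is_derive_gmean; assumption].
  assert (Hp : 0 < - a / 2) by lra. exists (mkposreal _ Hp). intros t Ht.
  change (Rabs (t - a) < - a / 2) in Ht. apply Rabs_lt_between in Ht.
  symmetry. apply is_derive_unique, is_derive_phiV; [assumption | lra].
Qed.

Lemma is_derive_gvar a lam : Cb lam -> a < 0 -> is_derive (fun b => gvar b lam) a
  (nmoment 3 a lam - 3 * nmoment 1 a lam * nmoment 2 a lam + 2 * nmoment 1 a lam ^ 3).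
Proof.
  intros Hl Ha. unfold gvar. eapply is_derive_eq.
  - apply (is_derive_minus (fun b => nmoment 2 b lam) (fun b => nmoment 1 b lam ^ 2));
      [|apply is_derive_pow]; apply is_derive_nmoment; assumption.
  - unfold minus, plus, opp; simpl. ring.
Qed.

End GibbsMoments.

(** * The root alpha(lam) and the variational formula *)

Lemma is_derive_mult_const c x : is_derive (fun b => b * c) x c.
Proof. auto_derive; [exact I | ring]. Qed.

Section Root.
Variable V : R -> R.
Hypothesis hV : Orlicz V.
Variable Rad : R.
Hypothesis hR : 0 < Rad.

Lemma moment0_ge_window lam B a n e : Cb lam -> (forall x, Rabs (lam x) <= B) -> a < 0 -> 0 <= n ->
  (forall x, Rabs x <= n -> e <= a * V x) -> 2 * n * exp (e - B) <= moment V 0 a lam.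
Proof.
  intros Hl HB Ha Hn He.
  eapply Rle_trans; [|apply (RInt_le_IntR _ (- n) n);
    [apply (moment_integrand_dominated V hV); assumption | apply (moment_integrand_ge0 V hV) | lra]].
  replace (2 * n * exp (e - B)) with (exp (e - B) * (n - - n)) by ring.
  apply RInt_ge_const; [lra | apply (moment_integrand_dominated V hV); assumption|].
  intros x Hx. simpl. rewrite Rmult_1_l. apply exp_le_compat.
  specialize (He x ltac:(apply Rabs_le; lra)). specialize (HB x). apply Rabs_le_between in HB. lra.
Qed.

(* From V <= eta + e^{t (V - eta)} / t, i.e. 1 + y <= e^y. *)
Lemma moment1_le_split lam a t eta : Cb lam -> 0 < t -> a + t < 0 ->
  moment V 1 a lam <= eta * moment V 0 a lam + / t * exp (- t * eta) * moment V 0 (a + t) lam.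
Proof.
  intros Hl Ht Hat.
  pose proof (moment_integrand_dominated V hV 0 a lam Hl ltac:(lra)) as D0.
  pose proof (moment_integrand_dominated V hV 0 (a + t) lam Hl Hat) as D0t.
  unfold moment. rewrite <- (IntR_scal _ _ D0), <- (IntR_scal _ _ D0t).
  rewrite <- (IntR_plus _ _ (quad_dominated_scal _ _ D0) (quad_dominated_scal _ _ D0t)).
  apply IntR_le; [apply (moment_integrand_dominated V hV); [assumption | lra] |
    apply quad_dominated_plus; apply quad_dominated_scal; assumption|].
  intros x. simpl. rewrite Rmult_1_r, !Rmult_1_l.
  assert (E : exp (- t * eta) * exp ((a + t) * V x + lam x) = exp (t * (V x - eta)) * exp (a * V x + lam x)).
  { rewrite <- !exp_plus. f_equal. ring. }
  pose proof (exp_ineq1_le (t * (V x - eta))). pose proof (exp_pos (a * V x + lam x)).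
  assert (V x <= eta + / t * exp (t * (V x - eta))).
  { apply Rmult_le_reg_l with t; [lra|]. rewrite Rmult_plus_distr_l, <- Rmult_assoc, Rinv_r by lra. nra. }
  replace (eta * exp (a * V x + lam x) + / t * exp (- t * eta) * exp ((a + t) * V x + lam x))
    with ((eta + / t * exp (t * (V x - eta))) * exp (a * V x + lam x))
    by (rewrite Rmult_assoc, E; ring).
  apply Rmult_le_compat_r; lra.
Qed.

Lemma moment0_ge_small_window lam B a d : Cb lam -> (forall x, Rabs (lam x) <= B) -> a < 0 -> 0 <= d <= 1 ->
  2 * d * exp (a * V 1 * d - B) <= moment V 0 a lam.
Proof.
  intros Hl HB Ha Hd. apply moment0_ge_window; auto; [lra|].
  intros x Hx. pose proof (Orlicz_le_linear V hV x ltac:(lra)).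
  assert (V 1 * Rabs x <= V 1 * d) by (apply Rmult_le_compat_l; [apply (Orlicz_ge0 V hV) | exact Hx]).
  rewrite Rmult_assoc. apply Rmult_le_compat_neg_l; lra.
Qed.

(* For very negative a the mass concentrates where V is small. *)
Lemma gmean_small lam : Cb lam -> exists a, a < 0 /\ gmean V a lam < Rad.
Proof.
  intros Hl. pose proof Hl as (_ & B & HB).
  set (c := V 1). assert (Hc0 : 0 < c) by (apply (Orlicz_gt0 V hV); lra).
  set (d := Rmin 1 (Rad / (4 * c))).
  assert (Hd : 0 < d) by (apply Rmin_pos; [lra | apply Rdiv_lt_0_compat; lra]).
  assert (Hd1 : d <= 1) by apply Rmin_l.
  assert (Hdc : c * d <= Rad / 4).
  { pose proof (Rmin_r 1 (Rad / (4 * c))) as H. fold d in H.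
    apply Rmult_le_compat_l with (r := c) in H; [|lra].
    replace (c * (Rad / (4 * c))) with (Rad / 4) in H by (field; lra). exact H. }
  set (Q := moment V 0 (-1) lam). assert (HQ : 0 < Q) by (apply (moment0_gt0 V hV); [exact Hl | lra]).
  pose proof (exp_pos B).
  set (t := 1 + Q * exp B / (Rad * d)).
  assert (Ht : 1 <= t) by (unfold t; assert (0 < Q * exp B / (Rad * d)) by (apply Rdiv_lt_0_compat; nra); lra).
  assert (Hkey : Q * exp B < Rad * d * t).
  { unfold t. replace (Rad * d * (1 + Q * exp B / (Rad * d))) with (Rad * d + Q * exp B) by (field; nra). nra. }
  set (a := - (2 * t)). set (eta := Rad / 2).
  exists a. split; [unfold a; lra|].
  pose proof (moment1_le_split lam a t eta Hl ltac:(lra) ltac:(unfold a; lra)) as H1.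
  replace (a + t) with (- t) in H1 by (unfold a; ring).
  assert (H2 : moment V 0 (- t) lam <= Q) by (apply (moment_le_compat V hV); [exact Hl | lra | lra]).
  assert (H3 : 2 * d * exp (- t * eta - B) <= moment V 0 a lam).
  { eapply Rle_trans; [|apply (moment0_ge_small_window lam B a d Hl HB); unfold a; lra].
    apply Rmult_le_compat_l; [lra|]. apply exp_le_compat. fold c. unfold a, eta. nra. }
  assert (H4 : / t * exp (- t * eta) * Q < eta * moment V 0 a lam).
  { apply Rlt_le_trans with (eta * (2 * d * exp (- t * eta - B)));
      [|apply Rmult_le_compat_l; [unfold eta; lra | exact H3]].
    replace (eta * (2 * d * exp (- t * eta - B))) with (/ t * exp (- t * eta) * (Rad * d * t * exp (- B)))
      by (unfold eta, Rminus; rewrite exp_plus; field; lra).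
    apply Rmult_lt_compat_l; [apply Rmult_lt_0_compat; [apply Rinv_0_lt_compat; lra | apply exp_pos]|].
    apply Rmult_lt_reg_r with (exp B); [apply exp_pos|].
    rewrite (Rmult_assoc (Rad * d * t)), (Rmult_comm (exp (- B))), exp_mul_exp_opp, Rmult_1_r.
    exact Hkey. }
  pose proof (moment0_gt0 V hV a lam Hl ltac:(unfold a; lra)).
  assert (/ t * exp (- t * eta) * moment V 0 (- t) lam <= / t * exp (- t * eta) * Q).
  { apply Rmult_le_compat_l; [|exact H2].
    apply Rmult_le_pos; [left; apply Rinv_0_lt_compat; lra | left; apply exp_pos]. }
  unfold gmean, nmoment. apply Rmult_lt_reg_r with (moment V 0 a lam); [assumption|].
  unfold Rdiv. rewrite Rmult_assoc, Rinv_l, Rmult_1_r by lra. unfold eta in *. lra.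
Qed.

(* As a -> 0^-, phi grows like ln n on windows [-n, n] where a V <= -1, while phi(-1) is fixed. *)
Lemma gmean_large lam : Cb lam -> exists a, a < 0 /\ Rad < gmean V a lam.
Proof.
  intros Hl. pose proof Hl as (_ & B & HB).
  set (c := V 1). assert (Hc0 : 0 < c) by (apply (Orlicz_gt0 V hV); lra).
  set (Q := moment V 0 (-1) lam). assert (HQ : 0 < Q) by (apply (moment0_gt0 V hV); [exact Hl | lra]).
  set (n := 2 + / c + exp (Rad + 1 + B + ln Q)).
  assert (Hic : 0 < / c) by (apply Rinv_0_lt_compat; lra).
  pose proof (exp_pos (Rad + 1 + B + ln Q)) as HE.
  assert (HVn : 1 < V n).
  { pose proof (Orlicz_ge_linear V hV n) as H. fold c in H. rewrite Rabs_right in H by (unfold n; lra).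
    assert (c * (n - 1) > 1).
    { unfold n. replace (c * (2 + / c + exp (Rad + 1 + B + ln Q) - 1))
        with (c * (1 + exp (Rad + 1 + B + ln Q)) + 1) by (field; lra). nra. }
    lra. }
  set (a := - / V n).
  assert (Ha : -1 < a < 0).
  { unfold a. assert (/ V n < 1) by (rewrite <- Rinv_1; apply Rinv_lt_contravar; lra).
    assert (0 < / V n) by (apply Rinv_0_lt_compat; lra). lra. }
  exists a. split; [lra|].
  assert (H1 : 2 * n * exp (-1 - B) <= moment V 0 a lam).
  { apply (moment0_ge_window lam B a n); auto; try (unfold n; lra); try lra. intros x Hx.
    pose proof (Orlicz_le_of_abs_le V hV n x Hx).
    assert (a * V n = -1) by (unfold a; field; lra).
    assert (a * V n <= a * V x) by (apply Rmult_le_compat_neg_l; lra). lra. }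
  destruct (MVT_cor2 (fun b => phiV V b lam) (fun b => gmean V b lam) (-1) a) as [xi [Exi Hxi]]; [lra| |].
  { intros b Hb. apply is_derive_Reals, (is_derive_phiV V hV); [exact Hl | lra]. }
  rewrite !(phiV_eq_ln_moment V) in Exi. fold Q in Exi.
  assert (H2 : gmean V xi lam < gmean V a lam) by (apply (gmean_lt V hV); auto; lra).
  assert (H3 : 0 < gmean V xi lam) by (apply (gmean_gt0 V hV); [exact Hl | lra]).
  assert (H4 : gmean V xi lam * (a - -1) <= gmean V xi lam) by nra.
  assert (H5 : ln (2 * n * exp (-1 - B)) <= ln (moment V 0 a lam)).
  { apply ln_le; [|exact H1]. apply Rmult_lt_0_compat; [unfold n; lra | apply exp_pos]. }
  rewrite ln_mult, ln_mult, ln_exp in H5 by (try apply exp_pos; unfold n; lra).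
  assert (H6 : Rad + 1 + B + ln Q < ln n).
  { rewrite <- (ln_exp (Rad + 1 + B + ln Q)). apply ln_increasing; [exact HE | unfold n; lra]. }
  assert (H7 : 0 < ln 2) by (pose proof ln_lt_2; lra).
  lra.
Qed.

Lemma gmean_root lam : Cb lam -> exists a, a < 0 /\ gmean V a lam = Rad.
Proof.
  intros Hl.
  destruct (gmean_small lam Hl) as [a1 [Ha1 H1]].
  destruct (gmean_large lam Hl) as [a2 [Ha2 H2]].
  assert (a1 < a2).
  { destruct (Rlt_le_dec a1 a2) as [|Hle]; [assumption|].
    pose proof (gmean_le V hV a2 a1 lam Hl Hle Ha1). lra. }
  destruct (Ranalysis5.IVT_interv (fun b => gmean V b lam - Rad) a1 a2) as [z [Hz Ez]]; [|assumption|lra|lra|].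
  - intros b Hb. apply continuity_pt_minus; [|apply continuity_pt_const; intros ? ?; reflexivity].
    apply (continuity_pt_of_is_derive _ _ (gvar V b lam)), (is_derive_gmean V hV); [exact Hl | lra].
  - exists z. split; lra.
Qed.

(* b |-> phi(b) - b Rad has derivative gmean - Rad, which is increasing and vanishes at a0. *)
Lemma phiV_tangent_glb lam a0 : Cb lam -> a0 < 0 -> gmean V a0 lam = Rad ->
  is_glb_Rbar (fun y => exists a, a < 0 /\ y = phiV V a lam - a * Rad) (phiV V a0 lam - a0 * Rad).
Proof.
  intros Hl Ha0 Hg.
  assert (Hd : forall b, b < 0 -> derivable_pt_lim (fun b => phiV V b lam - b * Rad) b (gmean V b lam - Rad)).
  { intros b Hb. apply is_derive_Reals.
    apply (is_derive_minus (fun b => phiV V b lam) (fun b => b * Rad));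
      [apply (is_derive_phiV V hV); assumption | apply is_derive_mult_const]. }
  split; [|intros b Hb; apply Hb; exists a0; split; [exact Ha0 | reflexivity]].
  intros y [a [Ha ->]]. simpl.
  destruct (Rtotal_order a a0) as [Hlt|[-> | Hgt]]; [| lra |].
  - destruct (MVT_cor2 _ _ a a0 Hlt (fun c Hc => Hd c ltac:(lra))) as [c [Ec Hc]].
    pose proof (gmean_le V hV c a0 lam Hl ltac:(lra) Ha0). nra.
  - destruct (MVT_cor2 _ _ a0 a Hgt (fun c Hc => Hd c ltac:(lra))) as [c [Ec Hc]].
    pose proof (gmean_le V hV a0 c lam Hl ltac:(lra) ltac:(lra)). nra.
Qed.

End Root.

(** * Perturbing lam *)

Lemma MVT_neg (f df : R -> R) x y : x < 0 -> y < 0 -> (forall t, t < 0 -> is_derive f t (df t)) ->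
  exists z, Rmin x y <= z <= Rmax x y /\ f y - f x = df z * (y - x).
Proof.
  intros Hx Hy Hd. pose proof (Rmax_lub_lt x y 0 Hx Hy).
  destruct (MVT_gen f x y df) as [z [Hz E]]; [intros t Ht; apply Hd; lra | | exists z; auto].
  intros t Ht. apply (continuity_pt_of_is_derive _ _ (df t)), Hd. lra.
Qed.

Section Perturbation.
Variable V : R -> R.
Hypothesis hV : Orlicz V.

Lemma moment_shift_bounds k a lam h : Cb lam -> Cb h -> a < 0 ->
  exp (- supnorm h) * moment V k a lam <= moment V k a (fun x => lam x + h x)
    <= exp (supnorm h) * moment V k a lam.
Proof.
  intros Hl Hh Ha. destruct (supnorm_spec h Hh) as [_ Hs].
  pose proof (moment_integrand_dominated V hV k a lam Hl Ha) as D.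
  pose proof (moment_integrand_dominated V hV k a _ (Cb_plus _ _ Hl Hh) Ha) as Dh.
  assert (E : forall x, V x ^ k * exp (a * V x + (lam x + h x)) = exp (h x) * (V x ^ k * exp (a * V x + lam x))).
  { intros x. replace (a * V x + (lam x + h x)) with (h x + (a * V x + lam x)) by ring. rewrite exp_plus. ring. }
  unfold moment. rewrite <- !(IntR_scal _ _ D).
  split; apply IntR_le; auto using quad_dominated_scal;
    intros x; rewrite E; apply Rmult_le_compat_r; try apply (moment_integrand_ge0 V hV);
    apply exp_le_compat; specialize (Hs x); apply Rabs_le_between in Hs; lra.
Qed.

Lemma nmoment_shift k a lam h : Cb lam -> Cb h -> a < 0 -> supnorm h <= 1 ->
  Rabs (nmoment V k a (fun x => lam x + h x) - nmoment V k a lam)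
    <= 2 * exp 2 * supnorm h * nmoment V k a lam.
Proof.
  intros Hl Hh Ha Hs1. destruct (supnorm_spec h Hh) as [Hs0 _].
  pose proof (Cb_plus _ _ Hl Hh).
  apply ratio_shift_le; try (apply (moment0_gt0 V hV); assumption); try (apply moment_shift_bounds; assumption).
  - lra.
  - apply (moment_ge0 V hV); assumption.
Qed.

Lemma gvar_shift a lam h : Cb lam -> Cb h -> a < 0 -> supnorm h <= 1 ->
  Rabs (gvar V a (fun x => lam x + h x) - gvar V a lam)
    <= 2 * exp 2 * supnorm h * (nmoment V 2 a lam + (2 + 2 * exp 2) * nmoment V 1 a lam ^ 2).
Proof.
  intros Hl Hh Ha Hs1. destruct (supnorm_spec h Hh) as [Hs0 _].
  pose proof (nmoment_shift 1 a lam h Hl Hh Ha Hs1) as P1. pose proof (nmoment_shift 2 a lam h Hl Hh Ha Hs1) as P2.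
  pose proof (nmoment_ge0 V hV 1 a lam Hl Ha). pose proof (nmoment_ge0 V hV 2 a lam Hl Ha).
  pose proof (nmoment_ge0 V hV 1 a _ (Cb_plus _ _ Hl Hh) Ha).
  set (s := supnorm h) in *. set (kap := 2 * exp 2) in *. unfold gvar.
  set (x1 := nmoment V 1 a lam) in *. set (x2 := nmoment V 2 a lam) in *.
  set (y1 := nmoment V 1 a (fun x => lam x + h x)) in *. set (y2 := nmoment V 2 a (fun x => lam x + h x)) in *.
  assert (Hk : 0 < kap) by (unfold kap; pose proof (exp_pos 2); lra).
  assert (Hy1 : y1 + x1 <= (2 + kap) * x1).
  { apply Rabs_le_between in P1. assert (kap * s * x1 <= kap * x1) by (apply Rmult_le_compat_r; nra). lra. }
  replace (y2 - y1 ^ 2 - (x2 - x1 ^ 2)) with ((y2 - x2) - (y1 - x1) * (y1 + x1)) by ring.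
  eapply Rle_trans; [apply Rabs_triang|]. rewrite Rabs_Ropp, Rabs_mult, (Rabs_right (y1 + x1)) by lra.
  assert (Rabs (y1 - x1) * (y1 + x1) <= kap * s * x1 * ((2 + kap) * x1))
    by (apply Rmult_le_compat; auto using Rabs_pos; lra).
  nra.
Qed.

Definition expect k a lam (f : R -> R) : R :=
  IntR (fun x => V x ^ k * f x * exp (a * V x + lam x)) / moment V 0 a lam.

Lemma expect_plus k a lam f g : Cb lam -> Cb f -> Cb g -> a < 0 ->
  expect k a lam (fun x => f x + g x) = expect k a lam f + expect k a lam g.
Proof.
  intros. unfold expect. rewrite <- Rdiv_plus_distr. f_equal.
  rewrite <- IntR_plus by (apply (gibbs_integrand_dominated V hV); assumption).
  apply IntR_ext. intros x. ring.
Qed.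

Lemma expect_scal k a lam c f : Cb lam -> Cb f -> a < 0 ->
  expect k a lam (fun x => c * f x) = c * expect k a lam f.
Proof.
  intros. unfold expect, Rdiv. rewrite <- Rmult_assoc. f_equal.
  rewrite <- IntR_scal by (apply (gibbs_integrand_dominated V hV); assumption).
  apply IntR_ext. intros x. ring.
Qed.

Lemma expect_le k a lam f g : Cb lam -> Cb f -> Cb g -> a < 0 -> (forall x, f x <= g x) ->
  expect k a lam f <= expect k a lam g.
Proof.
  intros Hl Hf Hg Ha Hfg. unfold expect, Rdiv.
  apply Rmult_le_compat_r; [left; apply Rinv_0_lt_compat, (moment0_gt0 V hV); assumption|].
  apply IntR_le; try (apply (gibbs_integrand_dominated V hV); assumption).
  intros x. apply Rmult_le_compat_r; [left; apply exp_pos|].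
  apply Rmult_le_compat_l; [apply pow_le, (Orlicz_ge0 V hV) | apply Hfg].
Qed.

Lemma expect_const k a lam c : Cb lam -> a < 0 -> expect k a lam (fun _ => c) = c * nmoment V k a lam.
Proof.
  intros Hl Ha. unfold expect, nmoment, moment, Rdiv. rewrite <- Rmult_assoc. f_equal.
  rewrite <- IntR_scal by (apply (moment_integrand_dominated V hV); assumption).
  apply IntR_ext. intros x. ring.
Qed.

Lemma expect_abs_le k a lam f S : Cb lam -> Cb f -> a < 0 -> (forall x, Rabs (f x) <= S) ->
  Rabs (expect k a lam f) <= S * nmoment V k a lam.
Proof.
  intros Hl Hf Ha HS. apply Rabs_le_between.
  rewrite Ropp_mult_distr_l, <- (expect_const k a lam (- S)), <- (expect_const k a lam S) by assumption.
  split; apply expect_le; auto using Cb_const; intros x; specialize (HS x); apply Rabs_le_between in HS; lra.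
Qed.

Definition exp_remainder (h : R -> R) x := exp (h x) - 1 - h x.

Lemma Cb_exp_remainder h : Cb h -> Cb (exp_remainder h).
Proof.
  intros [Hc [B HB]]. split.
  - intros x. unfold exp_remainder.
    apply continuous_Rminus; [apply continuous_Rminus; [apply continuous_exp_comp, Hc | apply continuous_const] | apply Hc].
  - exists (exp B + 1 + B). intros x. unfold exp_remainder.
    pose proof (exp_remainder_bounds (h x)) as [R1 _].
    rewrite Rabs_right by lra. specialize (HB x). apply Rabs_le_between in HB.
    assert (exp (h x) <= exp B) by (apply exp_le_compat; lra). lra.
Qed.

(* e^{lam + h} = e^{lam} (1 + h + (e^h - 1 - h)) *)
Lemma moment_shift_expand k a lam h : Cb lam -> Cb h -> a < 0 ->
  moment V k a (fun x => lam x + h x) / moment V 0 a lam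
    = nmoment V k a lam + expect k a lam h + expect k a lam (exp_remainder h).
Proof.
  intros Hl Hh Ha. unfold nmoment, expect. rewrite <- !Rdiv_plus_distr. f_equal.
  pose proof (moment_integrand_dominated V hV k a lam Hl Ha) as D0.
  pose proof (gibbs_integrand_dominated V hV k a lam h Hl Hh Ha) as D1.
  pose proof (gibbs_integrand_dominated V hV k a lam _ Hl (Cb_exp_remainder h Hh) Ha) as D2.
  unfold moment. rewrite <- (IntR_plus _ _ D0 D1), <- (IntR_plus _ _ (quad_dominated_plus _ _ D0 D1) D2).
  apply IntR_ext. intros x. unfold exp_remainder.
  replace (a * V x + (lam x + h x)) with (h x + (a * V x + lam x)) by ring. rewrite exp_plus. ring.
Qed.

Lemma expect_exp_remainder_bounds k a lam h : Cb lam -> Cb h -> a < 0 -> supnorm h <= 1 ->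
  0 <= expect k a lam (exp_remainder h) <= 3 * supnorm h ^ 2 * nmoment V k a lam.
Proof.
  intros Hl Hh Ha Hs1. destruct (supnorm_spec h Hh) as [Hs0 Hs].
  rewrite <- (Rmult_0_l (nmoment V k a lam)), <- !expect_const by assumption.
  split; apply expect_le; auto using Cb_const, Cb_exp_remainder;
    intros x; unfold exp_remainder; pose proof (exp_remainder_bounds (h x)) as [R1 R2]; [lra|].
  specialize (Hs x).
  assert (exp (Rabs (h x)) <= 3) by (apply exp_le_3_unit; lra).
  assert (h x ^ 2 <= supnorm h ^ 2) by (rewrite <- (pow2_abs (h x)); apply pow_incr; split; auto using Rabs_pos).
  pose proof (exp_pos (Rabs (h x))). pose proof (pow2_ge_0 (h x)). nra.
Qed.

Definition window_bound k lo hi lam := moment V k hi lam / moment V 0 lo lam.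

Lemma nmoment_le_window k a lo hi lam : Cb lam -> lo <= a <= hi -> hi < 0 ->
  nmoment V k a lam <= window_bound k lo hi lam.
Proof.
  intros Hl Ha Hhi. unfold nmoment, window_bound.
  pose proof (moment0_gt0 V hV lo lam Hl ltac:(lra)). pose proof (moment0_gt0 V hV a lam Hl ltac:(lra)).
  pose proof (moment_le_compat V hV k a hi lam Hl ltac:(lra) Hhi).
  pose proof (moment_le_compat V hV 0 lo a lam Hl ltac:(lra) ltac:(lra)).
  pose proof (moment_ge0 V hV k a lam Hl ltac:(lra)).
  unfold Rdiv. apply Rmult_le_compat; [lra | left; apply Rinv_0_lt_compat; lra | lra|].
  apply Rinv_le_contravar; lra.
Qed.

Lemma window_bound_ge0 k lo hi lam : Cb lam -> lo < 0 -> hi < 0 -> 0 <= window_bound k lo hi lam.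
Proof. intros. apply Rdiv_le_0_compat; [apply (moment_ge0 V hV) | apply (moment0_gt0 V hV)]; assumption. Qed.

Definition gvar_lipschitz_const lo hi lam :=
  window_bound 3 lo hi lam + 3 * window_bound 1 lo hi lam * window_bound 2 lo hi lam
  + 2 * window_bound 1 lo hi lam ^ 3.

Lemma gvar_lipschitz_window lo hi lam z1 z2 : Cb lam -> hi < 0 -> lo <= z1 <= hi -> lo <= z2 <= hi ->
  Rabs (gvar V z1 lam - gvar V z2 lam) <= gvar_lipschitz_const lo hi lam * Rabs (z1 - z2).
Proof.
  intros Hl Hhi H1 H2.
  destruct (MVT_neg (fun b => gvar V b lam) (fun b => nmoment V 3 b lam - 3 * nmoment V 1 b lam * nmoment V 2 b lam
    + 2 * nmoment V 1 b lam ^ 3) z2 z1) as [z [Hz E]]; try lra.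
  { intros t Ht. apply (is_derive_gvar V hV); assumption. }
  rewrite E, Rabs_mult. apply Rmult_le_compat_r; [apply Rabs_pos|].
  assert (Hzw : lo <= z <= hi).
  { split; [apply Rle_trans with (Rmin z2 z1); [apply Rmin_glb|]; lra |
            apply Rle_trans with (Rmax z2 z1); [|apply Rmax_lub]; lra]. }
  pose proof (nmoment_ge0 V hV 1 z lam Hl ltac:(lra)). pose proof (nmoment_ge0 V hV 2 z lam Hl ltac:(lra)).
  pose proof (nmoment_ge0 V hV 3 z lam Hl ltac:(lra)).
  pose proof (nmoment_le_window 1 z lo hi lam Hl Hzw Hhi). pose proof (nmoment_le_window 2 z lo hi lam Hl Hzw Hhi).
  pose proof (nmoment_le_window 3 z lo hi lam Hl Hzw Hhi).
  unfold gvar_lipschitz_const.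
  set (x1 := nmoment V 1 z lam) in *. set (x2 := nmoment V 2 z lam) in *. set (x3 := nmoment V 3 z lam) in *.
  set (P1 := window_bound 1 lo hi lam) in *. set (P2 := window_bound 2 lo hi lam) in *.
  set (P3 := window_bound 3 lo hi lam) in *.
  assert (x1 * x2 <= P1 * P2) by (apply Rmult_le_compat; lra).
  assert (x1 ^ 3 <= P1 ^ 3) by (apply pow_incr; lra).
  assert (0 <= x1 ^ 3) by (apply pow_le; lra). assert (0 <= x1 * x2) by nra.
  apply Rabs_le_between. split; lra.
Qed.

End Perturbation.

(** * Frechet differentiability *)

Lemma ln_linearization_estimate s A0 e0 : 0 <= s <= 1 -> Rabs A0 <= s -> 0 <= e0 <= 3 * s ^ 2 ->
  / 3 <= 1 + A0 + e0 -> Rabs (ln (1 + A0 + e0) - A0) <= 51 * s ^ 2.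
Proof.
  intros Hs H0 He Hq. pose proof (ln_sub_linear_le _ Hq) as H.
  replace (1 + A0 + e0 - 1) with (A0 + e0) in H by ring.
  assert (Rabs (A0 + e0) <= 4 * s)
    by (eapply Rle_trans; [apply Rabs_triang|]; rewrite (Rabs_right e0) by lra; nra).
  assert ((A0 + e0) ^ 2 <= 16 * s ^ 2).
  { rewrite <- (pow2_abs (A0 + e0)). replace (16 * s ^ 2) with ((4 * s) ^ 2) by ring.
    apply pow_incr. split; [apply Rabs_pos | assumption]. }
  replace (ln (1 + A0 + e0) - A0) with ((ln (1 + A0 + e0) - (A0 + e0)) + e0) by ring.
  eapply Rle_trans; [apply Rabs_triang|]. rewrite (Rabs_right e0) by lra. lra.
Qed.

Lemma ratio_linearization_estimate R s A0 A1 e0 e1 : 0 < R -> 0 <= s <= 1 -> Rabs A0 <= s ->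
  Rabs A1 <= s * R -> 0 <= e0 <= 3 * s ^ 2 -> 0 <= e1 <= 3 * s ^ 2 * R -> / 3 <= 1 + A0 + e0 ->
  Rabs ((R + A1 + e1) / (1 + A0 + e0) - R - (A1 - R * A0)) <= 42 * R * s ^ 2.
Proof.
  intros HR Hs H0 H1 He0 He1 Hq.
  set (q := 1 + A0 + e0) in *.
  replace ((R + A1 + e1) / q - R - (A1 - R * A0))
    with ((e1 - R * e0 - A1 * A0 - A1 * e0 + R * (A0 * A0) + R * (A0 * e0)) / q) by (unfold q in *; field; lra).
  unfold Rdiv. rewrite Rabs_mult, Rabs_inv, (Rabs_right q) by lra.
  assert (Hn : Rabs (e1 - R * e0 - A1 * A0 - A1 * e0 + R * (A0 * A0) + R * (A0 * e0)) <= 14 * R * s ^ 2).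
  { assert (Habs : forall x, 0 <= x -> Rabs x = x) by (intros; apply Rabs_right; lra).
    assert (T1 : Rabs e1 <= 3 * s ^ 2 * R) by (rewrite Habs; lra).
    assert (T2 : Rabs (R * e0) <= R * (3 * s ^ 2)) by (apply Rabs_mult_le; rewrite Habs; lra).
    assert (T3 : Rabs (A1 * A0) <= s * R * s) by (apply Rabs_mult_le; assumption).
    assert (T4 : Rabs (A1 * e0) <= s * R * (3 * s ^ 2)) by (apply Rabs_mult_le; [|rewrite Habs]; lra).
    assert (T5 : Rabs (R * (A0 * A0)) <= R * (s * s))
      by (apply Rabs_mult_le; [rewrite Habs; lra | apply Rabs_mult_le; assumption]).
    assert (T6 : Rabs (R * (A0 * e0)) <= R * (s * (3 * s ^ 2)))
      by (apply Rabs_mult_le; [rewrite Habs; lra | apply Rabs_mult_le; [|rewrite Habs]; lra]).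
    apply Rabs_le_between in T1, T2, T3, T4, T5, T6.
    assert (s * R * (3 * s ^ 2) <= 3 * R * s ^ 2) by (assert (0 <= R * s ^ 2) by nra; simpl; nra).
    assert (R * (s * (3 * s ^ 2)) <= 3 * R * s ^ 2) by (assert (0 <= R * s ^ 2) by nra; simpl; nra).
    apply Rabs_le_between. split; nra. }
  assert (0 < / q) by (apply Rinv_0_lt_compat; lra).
  assert (/ q <= 3) by (rewrite <- (Rinv_inv 3); apply Rinv_le_contravar; lra).
  apply Rle_trans with (14 * R * s ^ 2 * 3); [apply Rmult_le_compat; auto using Rabs_pos; lra|].
  assert (0 <= R * s ^ 2) by nra. nra.
Qed.

Lemma mul_lt_of_lt_div_succ K s c : 0 <= K -> 0 <= s -> s < c / (K + 1) -> K * s < c.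
Proof.
  intros HK Hs H. apply Rmult_lt_compat_r with (r := K + 1) in H; [|lra].
  replace (c / (K + 1) * (K + 1)) with c in H by (field; lra). nra.
Qed.

Section Frechet.
Variable V : R -> R.
Hypothesis hV : Orlicz V.
Variable Rad : R.
Hypothesis hR : 0 < Rad.
Variable lam : R -> R.
Hypothesis Hl : Cb lam.
Variable a : R.
Hypothesis Ha : a < 0.
Hypothesis Hga : gmean V a lam = Rad.

(* All estimates are uniform for roots in the window [lo, hi] around a. *)
Let lo := 3 * a / 2.
Let hi := a / 2.
Let P1 := window_bound V 1 lo hi lam.
Let P2 := window_bound V 2 lo hi lam.
Let W := gvar_lipschitz_const V lo hi lam.
Let v0 := gvar V a lam.
Let kap := 2 * exp 2.
Let eta := Rmin (- a / 2) (v0 / (2 * (W + 1))).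
Let Cv := kap * (P2 + (2 + kap) * P1 ^ 2).
Let A := 4 * kap * P1 / v0.
Let Cf := kap * P1 * A + Rad * ((W * A + Cv) * A + 42 * Rad) / v0 + 51.

(* E[h] - Rad Cov(V, h) / Var(V) under the density at (a, lam): the chain rule for
   lam |-> phi(alpha lam, lam), since d alpha = - Cov(V, .) / Var(V) and d phi / d alpha = Rad. *)
Definition root_derivative (h : R -> R) : R :=
  expect V 0 a lam h - Rad / v0 * (expect V 1 a lam h - Rad * expect V 0 a lam h).

Lemma in_window z : Rabs (z - a) <= - a / 2 -> lo <= z <= hi.
Proof. intros Hz. apply Rabs_le_between in Hz. unfold lo, hi. lra. Qed.

Lemma window_consts_ge0 : 0 <= P1 /\ 0 <= P2 /\ 0 <= W /\ 0 < v0 /\ 0 < kap.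
Proof.
  assert (lo < 0) by (unfold lo; lra). assert (hi < 0) by (unfold hi; lra).
  pose proof (window_bound_ge0 V hV 1 lo hi lam Hl ltac:(assumption) ltac:(assumption)).
  pose proof (window_bound_ge0 V hV 2 lo hi lam Hl ltac:(assumption) ltac:(assumption)).
  pose proof (window_bound_ge0 V hV 3 lo hi lam Hl ltac:(assumption) ltac:(assumption)).
  assert (0 <= window_bound V 1 lo hi lam ^ 3) by (apply pow_le; assumption).
  repeat split; try assumption.
  - unfold W, gvar_lipschitz_const. nra.
  - apply (gvar_gt0 V hV); assumption.
  - unfold kap. pose proof (exp_pos 2). lra.
Qed.

Lemma eta_spec : 0 < eta /\ eta <= - a / 2 /\ W * eta <= v0 / 2.
Proof.
  destruct window_consts_ge0 as (_ & _ & HW & Hv0 & _).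
  pose proof (Rmin_l (- a / 2) (v0 / (2 * (W + 1)))) as H1.
  pose proof (Rmin_r (- a / 2) (v0 / (2 * (W + 1)))) as H2. fold eta in H1, H2.
  split; [apply Rmin_pos; [lra | apply Rdiv_lt_0_compat; lra]|]. split; [assumption|].
  apply Rmult_le_compat_l with (r := 2 * (W + 1)) in H2; [|lra].
  replace (2 * (W + 1) * (v0 / (2 * (W + 1)))) with v0 in H2 by (field; lra).
  assert (0 <= eta) by (apply Rlt_le, Rmin_pos; [lra | apply Rdiv_lt_0_compat; lra]). nra.
Qed.

Lemma gvar_ge_near_root z : Rabs (z - a) <= eta -> v0 / 2 <= gvar V z lam.
Proof.
  intros Hz. destruct eta_spec as (_ & He1 & He2). destruct window_consts_ge0 as (_ & _ & HW & _).
  pose proof (gvar_lipschitz_window V hV lo hi lam z a Hl ltac:(unfold hi; lra)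
    (in_window z ltac:(lra)) (in_window a ltac:(rewrite Rminus_diag, Rabs_R0; lra))) as H.
  fold W v0 in H.
  assert (W * Rabs (z - a) <= W * eta) by (apply Rmult_le_compat_l; assumption).
  apply Rabs_le_between in H. lra.
Qed.

Lemma gmean_root_gap : gmean V (a - eta) lam <= Rad - eta * (v0 / 2) /\
                       Rad + eta * (v0 / 2) <= gmean V (a + eta) lam.
Proof.
  destruct eta_spec as (He0 & He1 & _).
  assert (Hd : forall t, t < 0 -> is_derive (fun b => gmean V b lam) t (gvar V t lam))
    by (intros t Ht; apply (is_derive_gmean V hV); assumption).
  split.
  - destruct (MVT_neg _ _ (a - eta) a ltac:(lra) Ha Hd) as [z [Hz E]].
    rewrite Rmin_left, Rmax_right in Hz by lra.
    assert (v0 / 2 <= gvar V z lam) by (apply gvar_ge_near_root, Rabs_le; lra).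
    rewrite Hga in E. nra.
  - destruct (MVT_neg _ _ a (a + eta) Ha ltac:(lra) Hd) as [z [Hz E]].
    rewrite Rmin_left, Rmax_right in Hz by lra.
    assert (v0 / 2 <= gvar V z lam) by (apply gvar_ge_near_root, Rabs_le; lra).
    rewrite Hga in E. nra.
Qed.

Section Shift.
Variable h : R -> R.
Hypothesis Hh : Cb h.
Let s := supnorm h.
Let lam' := fun x => lam x + h x.
Let Hl' : Cb lam' := Cb_plus lam h Hl Hh.
Hypothesis Hs1 : s <= 1.
Hypothesis Hs2 : kap * P1 * s < eta * (v0 / 2).
Hypothesis Hs3 : Cv * s < v0 / 4.
Variable a' : R.
Hypothesis Ha' : a' < 0.
Hypothesis Hga' : gmean V a' lam' = Rad.

Lemma shift_size_ge0 : 0 <= s.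
Proof. exact (proj1 (supnorm_spec h Hh)). Qed.

Lemma gmean_shift_window z : lo <= z <= hi -> Rabs (gmean V z lam' - gmean V z lam) <= kap * s * P1.
Proof.
  intros Hz. pose proof shift_size_ge0 as Hs0.
  destruct window_consts_ge0 as (_ & _ & _ & _ & Hk).
  eapply Rle_trans; [apply (nmoment_shift V hV 1 z lam h Hl Hh); [unfold hi in Hz; lra | exact Hs1]|].
  apply Rmult_le_compat_l; [nra|]. apply (nmoment_le_window V hV); [assumption | assumption | unfold hi; lra].
Qed.

Lemma root_shift_local : Rabs (a' - a) < eta.
Proof.
  destruct eta_spec as (He0 & He1 & _). destruct gmean_root_gap as [G1 G2].
  assert (W1 : lo <= a + eta <= hi) by (apply in_window; replace (a + eta - a) with eta by ring;
                                        rewrite Rabs_right; lra).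
  assert (W2 : lo <= a - eta <= hi) by (apply in_window; replace (a - eta - a) with (- eta) by ring;
                                        rewrite Rabs_Ropp, Rabs_right; lra).
  pose proof (gmean_shift_window _ W1) as S1. pose proof (gmean_shift_window _ W2) as S2.
  apply Rabs_le_between in S1, S2. apply Rabs_lt_between. split.
  - destruct (Rle_lt_dec a' (a - eta)) as [Hle|]; [exfalso|lra].
    pose proof (gmean_le V hV a' (a - eta) lam' Hl' Hle ltac:(lra)). unfold lam' in *. lra.
  - destruct (Rle_lt_dec (a + eta) a') as [Hle|]; [exfalso|lra].
    pose proof (gmean_le V hV (a + eta) a' lam' Hl' Hle Ha'). unfold lam' in *. lra.
Qed.

Lemma gvar_shift_window z : lo <= z <= hi -> Rabs (gvar V z lam' - gvar V z lam) <= Cv * s.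
Proof.
  intros Hzw. pose proof shift_size_ge0 as Hs0.
  destruct window_consts_ge0 as (HP1 & HP2 & _ & _ & Hk).
  eapply Rle_trans; [apply (gvar_shift V hV z lam h Hl Hh); [unfold hi in Hzw; lra | exact Hs1]|]. fold kap s.
  pose proof (nmoment_le_window V hV 1 z lo hi lam Hl Hzw ltac:(unfold hi; lra)) as Q1.
  pose proof (nmoment_le_window V hV 2 z lo hi lam Hl Hzw ltac:(unfold hi; lra)) as Q2.
  pose proof (nmoment_ge0 V hV 1 z lam Hl ltac:(unfold hi in Hzw; lra)). fold P1 in Q1. fold P2 in Q2.
  assert (nmoment V 1 z lam ^ 2 <= P1 ^ 2) by (apply pow_incr; lra).
  unfold Cv. replace (kap * (P2 + (2 + kap) * P1 ^ 2) * s) with (kap * s * (P2 + (2 + kap) * P1 ^ 2)) by ring.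
  apply Rmult_le_compat_l; nra.
Qed.

Lemma gvar_shift_near_root z : Rabs (z - a) <= eta -> v0 / 4 <= gvar V z lam'.
Proof.
  intros Hz. destruct eta_spec as (_ & He1 & _).
  pose proof (gvar_ge_near_root z Hz). pose proof (gvar_shift_window z (in_window z ltac:(lra))) as VP.
  apply Rabs_le_between in VP. lra.
Qed.

Lemma root_shift_mvt : exists z, Rabs (z - a) <= Rabs (a' - a) /\
  Rad - gmean V a lam' = gvar V z lam' * (a' - a).
Proof.
  destruct (MVT_neg (fun b => gmean V b lam') (fun b => gvar V b lam') a a' Ha Ha') as [z [Hz E]].
  { intros t Ht. apply (is_derive_gmean V hV); assumption. }
  exists z. split; [|rewrite <- Hga'; exact E].
  apply Rabs_le. destruct (Rle_dec a a');
    [rewrite Rmin_left, Rmax_right in Hz by lra; rewrite (Rabs_right (a' - a)) by lra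
    |rewrite Rmin_right, Rmax_left in Hz by lra; rewrite (Rabs_left (a' - a)) by lra]; lra.
Qed.

Lemma root_shift_lipschitz : Rabs (a' - a) <= A * s.
Proof.
  destruct window_consts_ge0 as (HP1 & _ & _ & Hv0 & Hk).
  destruct (root_shift_mvt) as [z [Hz E]]. pose proof root_shift_local.
  pose proof (gvar_shift_near_root z ltac:(lra)) as Vz.
  pose proof (gmean_shift_window a (in_window a ltac:(rewrite Rminus_diag, Rabs_R0; lra))) as G.
  rewrite Hga, Rabs_minus_sym, E, Rabs_mult, (Rabs_right (gvar V z lam')) in G by lra.
  unfold A. apply Rmult_le_reg_l with (v0 / 4); [lra|].
  replace (v0 / 4 * (4 * kap * P1 / v0 * s)) with (kap * s * P1) by (field; lra).
  eapply Rle_trans; [|exact G]. apply Rmult_le_compat_r; [apply Rabs_pos | exact Vz].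
Qed.

Let A0 := expect V 0 a lam h.
Let A1 := expect V 1 a lam h.
Let e0 := expect V 0 a lam (exp_remainder h).
Let e1 := expect V 1 a lam (exp_remainder h).

Lemma shift_expansion_bounds : Rabs A0 <= s /\ Rabs A1 <= s * Rad /\ 0 <= e0 <= 3 * s ^ 2 /\
  0 <= e1 <= 3 * s ^ 2 * Rad /\ / 3 <= 1 + A0 + e0.
Proof.
  destruct (supnorm_spec h Hh) as [_ Hsx].
  assert (N0 : nmoment V 0 a lam = 1) by (apply (nmoment0 V hV); assumption).
  assert (N1 : nmoment V 1 a lam = Rad) by exact Hga.
  pose proof (expect_abs_le V hV 0 a lam h s Hl Hh Ha Hsx) as B0.
  pose proof (expect_abs_le V hV 1 a lam h s Hl Hh Ha Hsx) as B1.
  pose proof (expect_exp_remainder_bounds V hV 0 a lam h Hl Hh Ha Hs1) as R0.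
  pose proof (expect_exp_remainder_bounds V hV 1 a lam h Hl Hh Ha Hs1) as R1.
  rewrite N0 in B0, R0. rewrite N1 in B1, R1. fold s A0 A1 e0 e1 in B0, B1, R0, R1.
  repeat split; try lra.
  pose proof (moment_shift_expand V hV 0 a lam h Hl Hh Ha) as E. rewrite N0 in E. fold A0 e0 in E.
  destruct (moment_shift_bounds V hV 0 a lam h Hl Hh Ha) as [Lo _].
  pose proof (exp_opp_ge_inv3 s Hs1). pose proof (moment0_gt0 V hV a lam Hl Ha).
  rewrite <- E. apply Rmult_le_reg_r with (moment V 0 a lam); [assumption|].
  unfold Rdiv. rewrite Rmult_assoc, Rinv_l, Rmult_1_r by lra. fold s in Lo. nra.
Qed.

Lemma gmean_shift_at_root : gmean V a lam' = (Rad + A1 + e1) / (1 + A0 + e0).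
Proof.
  pose proof (moment_shift_expand V hV 0 a lam h Hl Hh Ha) as E0.
  pose proof (moment_shift_expand V hV 1 a lam h Hl Hh Ha) as E1.
  rewrite (nmoment0 V hV) in E0 by assumption. change (nmoment V 1 a lam) with (gmean V a lam) in E1.
  rewrite Hga in E1. fold A0 A1 e0 e1 lam' in E0, E1. rewrite <- E0, <- E1.
  pose proof (moment0_gt0 V hV a lam Hl Ha). pose proof (moment0_gt0 V hV a lam' Hl' Ha).
  unfold gmean, nmoment. field. lra.
Qed.

Lemma phiV_shift_at_root : phiV V a lam' = phiV V a lam + ln (1 + A0 + e0).
Proof.
  pose proof (moment_shift_expand V hV 0 a lam h Hl Hh Ha) as E0.
  rewrite (nmoment0 V hV) in E0 by assumption. fold A0 e0 lam' in E0. rewrite <- E0.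
  pose proof (moment0_gt0 V hV a lam Hl Ha). pose proof (moment0_gt0 V hV a lam' Hl' Ha).
  rewrite !(phiV_eq_ln_moment V), <- ln_mult by (try apply Rdiv_lt_0_compat; lra).
  f_equal. field. lra.
Qed.

(* The root equation gmean a' lam' = Rad linearised at (a, lam); A1 - Rad A0 = Cov(V, h). *)
Lemma root_shift_linearization : Rabs (v0 * (a' - a) + (A1 - Rad * A0)) <= ((W * A + Cv) * A + 42 * Rad) * s ^ 2.
Proof.
  pose proof shift_size_ge0 as Hs0. destruct eta_spec as (_ & He1 & _).
  destruct window_consts_ge0 as (HP1 & HP2 & HW & Hv0 & Hk).
  destruct shift_expansion_bounds as (BA0 & BA1 & Be0 & Be1 & Hq).
  destruct root_shift_mvt as [z [Hz E]]. pose proof root_shift_local. pose proof root_shift_lipschitz as Dl.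
  assert (HA : 0 <= A) by (unfold A; apply Rdiv_le_0_compat; nra).
  assert (Bv : Rabs (v0 - gvar V z lam') <= (W * A + Cv) * s).
  { replace (v0 - gvar V z lam') with ((gvar V a lam - gvar V z lam) + (gvar V z lam - gvar V z lam'))
      by (unfold v0; ring).
    eapply Rle_trans; [apply Rabs_triang|].
    assert (Hzw : lo <= z <= hi) by (apply in_window; lra).
    pose proof (gvar_lipschitz_window V hV lo hi lam a z Hl ltac:(unfold hi; lra)
      (in_window a ltac:(rewrite Rminus_diag, Rabs_R0; lra)) Hzw) as L. fold W in L.
    pose proof (gvar_shift_window z Hzw) as VP. rewrite Rabs_minus_sym in Hz, VP.
    assert (W * Rabs (a - z) <= W * (A * s)) by (apply Rmult_le_compat_l; lra).
    lra. }
  pose proof (ratio_linearization_estimate Rad s A0 A1 e0 e1 hR (conj Hs0 Hs1) BA0 BA1 Be0 Be1 Hq) as Q.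
  rewrite <- gmean_shift_at_root in Q.
  replace (v0 * (a' - a) + (A1 - Rad * A0))
    with ((v0 - gvar V z lam') * (a' - a) - (gmean V a lam' - Rad - (A1 - Rad * A0))) by lra.
  eapply Rle_trans; [apply Rabs_triang|]. rewrite Rabs_Ropp.
  assert (Rabs ((v0 - gvar V z lam') * (a' - a)) <= (W * A + Cv) * s * (A * s)) by (apply Rabs_mult_le; assumption).
  replace (((W * A + Cv) * A + 42 * Rad) * s ^ 2) with ((W * A + Cv) * s * (A * s) + 42 * Rad * s ^ 2) by ring.
  lra.
Qed.

Lemma gmean_between_roots xi : Rmin a a' <= xi <= Rmax a a' ->
  Rabs (gmean V xi lam' - Rad) <= kap * s * P1.
Proof.
  intros Hxi. pose proof root_shift_local.
  pose proof (gmean_shift_window a (in_window a ltac:(rewrite Rminus_diag, Rabs_R0; lra))) as G.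
  rewrite Hga in G. apply Rabs_le_between in G. apply Rabs_le_between.
  destruct (Rle_dec a a').
  - rewrite Rmin_left, Rmax_right in Hxi by lra.
    pose proof (gmean_le V hV a xi lam' Hl' ltac:(lra) ltac:(lra)).
    pose proof (gmean_le V hV xi a' lam' Hl' ltac:(lra) Ha'). lra.
  - rewrite Rmin_right, Rmax_left in Hxi by lra.
    pose proof (gmean_le V hV xi a lam' Hl' ltac:(lra) Ha).
    pose proof (gmean_le V hV a' xi lam' Hl' ltac:(lra) ltac:(lra)). lra.
Qed.

Lemma value_shift_estimate : Rabs (phiV V a' lam' - phiV V a lam - root_derivative h) <= Cf * s ^ 2.
Proof.
  pose proof shift_size_ge0 as Hs0.
  destruct window_consts_ge0 as (HP1 & HP2 & HW & Hv0 & Hk).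
  destruct shift_expansion_bounds as (BA0 & BA1 & Be0 & Be1 & Hq).
  assert (HA : 0 <= A) by (unfold A; apply Rdiv_le_0_compat; nra).
  pose proof root_shift_lipschitz as Dl. pose proof root_shift_linearization as Y.
  pose proof (ln_linearization_estimate s A0 e0 (conj Hs0 Hs1) BA0 Be0 Hq) as Lg.
  destruct (MVT_neg (fun b => phiV V b lam') (fun b => gmean V b lam') a a' Ha Ha') as [xi [Hxi Exi]].
  { intros t Ht. apply (is_derive_phiV V hV); assumption. }
  pose proof (gmean_between_roots xi Hxi) as Xb.
  assert (Ephi : phiV V a' lam' = phiV V a lam + ln (1 + A0 + e0) + gmean V xi lam' * (a' - a))
    by (rewrite <- phiV_shift_at_root; cbv beta in Exi; lra).
  unfold root_derivative. fold A0 A1. rewrite Ephi.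
  replace (phiV V a lam + ln (1 + A0 + e0) + gmean V xi lam' * (a' - a) - phiV V a lam
           - (A0 - Rad / v0 * (A1 - Rad * A0)))
    with ((gmean V xi lam' - Rad) * (a' - a) + Rad / v0 * (v0 * (a' - a) + (A1 - Rad * A0))
          + (ln (1 + A0 + e0) - A0))
    by (field; lra).
  assert (T1 : Rabs ((gmean V xi lam' - Rad) * (a' - a)) <= kap * s * P1 * (A * s))
    by (apply Rabs_mult_le; assumption).
  assert (T2 : Rabs (Rad / v0 * (v0 * (a' - a) + (A1 - Rad * A0)))
               <= Rad / v0 * (((W * A + Cv) * A + 42 * Rad) * s ^ 2)).
  { rewrite Rabs_mult, (Rabs_right (Rad / v0)) by (apply Rle_ge, Rdiv_le_0_compat; lra).
    apply Rmult_le_compat_l; [apply Rdiv_le_0_compat; lra | exact Y]. }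
  replace (Cf * s ^ 2) with (kap * s * P1 * (A * s) + Rad / v0 * (((W * A + Cv) * A + 42 * Rad) * s ^ 2)
                             + 51 * s ^ 2) by (unfold Cf; field; lra).
  eapply Rle_trans; [apply Rabs_triang|].
  pose proof (Rabs_triang ((gmean V xi lam' - Rad) * (a' - a)) (Rad / v0 * (v0 * (a' - a) + (A1 - Rad * A0)))).
  lra.
Qed.

End Shift.

Lemma root_derivative_bounded_linear : bounded_linear_Cb root_derivative.
Proof.
  destruct window_consts_ge0 as (_ & _ & _ & Hv0 & _). unfold root_derivative.
  split; [|split].
  - intros f g Hf Hg. rewrite !(expect_plus V hV) by assumption. ring.
  - intros c f Hf. rewrite !(expect_scal V hV) by assumption. ring.
  - exists (1 + 2 * Rad * Rad / v0). intros f Hf. destruct (supnorm_spec f Hf) as [Hs0 Hs].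
    pose proof (expect_abs_le V hV 0 a lam f _ Hl Hf Ha Hs) as B0.
    pose proof (expect_abs_le V hV 1 a lam f _ Hl Hf Ha Hs) as B1.
    rewrite (nmoment0 V hV) in B0 by assumption. change (nmoment V 1 a lam) with (gmean V a lam) in B1.
    rewrite Hga in B1.
    set (s := supnorm f) in *. set (x0 := expect V 0 a lam f) in *. set (x1 := expect V 1 a lam f) in *.
    assert (Rabs (x1 - Rad * x0) <= 2 * Rad * s).
    { eapply Rle_trans; [apply Rabs_triang|]. rewrite Rabs_Ropp, Rabs_mult, (Rabs_right Rad) by lra. nra. }
    eapply Rle_trans; [apply Rabs_triang|]. rewrite Rabs_Ropp, Rabs_mult.
    rewrite (Rabs_right (Rad / v0)) by (apply Rle_ge, Rdiv_le_0_compat; lra).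
    assert (Rad / v0 * Rabs (x1 - Rad * x0) <= Rad / v0 * (2 * Rad * s))
      by (apply Rmult_le_compat_l; [apply Rdiv_le_0_compat; lra | assumption]).
    replace ((1 + 2 * Rad * Rad / v0) * s) with (s + Rad / v0 * (2 * Rad * s)) by (field; lra). lra.
Qed.

Lemma root_value_frechet (alpha : (R -> R) -> R) :
  (forall mu, Cb mu -> alpha mu < 0 /\ gmean V (alpha mu) mu = Rad) -> alpha lam = a ->
  Frechet_diff_Cb (fun mu => phiV V (alpha mu) mu) lam.
Proof.
  intros Hal Hroot. exists root_derivative. split; [exact root_derivative_bounded_linear|].
  destruct window_consts_ge0 as (HP1 & HP2 & HW & Hv0 & Hk). destruct eta_spec as (He0 & _ & _).
  assert (HA : 0 <= A) by (unfold A; apply Rdiv_le_0_compat; nra).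
  assert (HCv : 0 <= Cv) by (unfold Cv; assert (0 <= P1 ^ 2) by apply pow2_ge_0; nra).
  assert (HCf : 0 <= Cf).
  { unfold Cf. assert (0 <= W * A) by (apply Rmult_le_pos; assumption).
    assert (0 <= (W * A + Cv) * A) by (apply Rmult_le_pos; lra).
    assert (0 <= Rad * ((W * A + Cv) * A + 42 * Rad) / v0)
      by (apply Rdiv_le_0_compat; [apply Rmult_le_pos|]; lra).
    assert (0 <= kap * P1 * A) by (apply Rmult_le_pos; [apply Rmult_le_pos|]; lra). lra. }
  intros eps Heps.
  set (d1 := Rmin 1 (eta * v0 / (2 * kap * P1 + 1))). set (d2 := Rmin (v0 / (4 * Cv + 1)) (eps / (Cf + 1))).
  assert (Hd1 : 0 < d1) by (apply Rmin_pos; [lra | apply Rdiv_lt_0_compat; nra]).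
  assert (Hd2 : 0 < d2) by (apply Rmin_pos; apply Rdiv_lt_0_compat; nra).
  exists (Rmin d1 d2). split; [apply Rmin_pos; assumption|].
  intros h Hh Hs. destruct (supnorm_spec h Hh) as [Hs0 _]. set (s := supnorm h) in *.
  pose proof (Rmin_l d1 d2). pose proof (Rmin_r d1 d2).
  assert (d1 <= 1) by apply Rmin_l. assert (d1 <= eta * v0 / (2 * kap * P1 + 1)) by apply Rmin_r.
  assert (d2 <= v0 / (4 * Cv + 1)) by apply Rmin_l. assert (d2 <= eps / (Cf + 1)) by apply Rmin_r.
  assert (0 <= 2 * kap * P1) by (apply Rmult_le_pos; lra).
  assert (Hs2 : 2 * kap * P1 * s < eta * v0) by (apply mul_lt_of_lt_div_succ; lra).
  assert (Hs3 : 4 * Cv * s < v0) by (apply mul_lt_of_lt_div_succ; lra).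
  assert (Hs4 : Cf * s < eps) by (apply mul_lt_of_lt_div_succ; lra).
  destruct (Hal (fun x => lam x + h x) (Cb_plus _ _ Hl Hh)) as [Ha' Hga'].
  pose proof (value_shift_estimate h Hh ltac:(fold s; lra) ltac:(fold s; lra) ltac:(fold s; lra) _ Ha' Hga') as Hv.
  fold s in Hv. rewrite Hroot. eapply Rle_trans; [exact Hv|].
  replace (Cf * s ^ 2) with ((Cf * s) * s) by ring. apply Rmult_le_compat_r; lra.
Qed.

End Frechet.

Theorem mainTheorem3 (V : R -> R) (Rad : R) (hV : Orlicz V) (hR : 0 < Rad) :
  let cond (lam : R -> R) (a : R) :=
    is_derive (fun b => phiV V b lam) a Rad /\
    (exists d2, 0 < d2 /\ is_derive (Derive (fun b => phiV V b lam)) a d2) in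
  exists alpha : (R -> R) -> R,
    (forall lam, Cb lam ->
       alpha lam < 0 /\ cond lam (alpha lam) /\
       (forall a, a < 0 -> cond lam a -> a = alpha lam)) /\
    (forall lam, Cb lam -> Frechet_diff_Cb (fun mu => phiV V (alpha mu) mu) lam) /\
    (forall lam, Cb lam ->
       is_glb_Rbar (fun y => exists a, a < 0 /\ y = phiV V a lam - a * Rad)
                   (phiV V (alpha lam) lam - alpha lam * Rad)).
Proof.
  intros cond.
  set (alpha := fun lam => epsilon (inhabits 0) (fun a => Cb lam -> a < 0 /\ gmean V a lam = Rad)).
  assert (Hal : forall mu, Cb mu -> alpha mu < 0 /\ gmean V (alpha mu) mu = Rad).
  { intros mu Hmu. apply (epsilon_spec (inhabits 0) (fun a => Cb mu -> a < 0 /\ gmean V a mu = Rad)); [|exact Hmu].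
    destruct (gmean_root V hV Rad hR mu Hmu) as [a Ha]. exists a. intros _. exact Ha. }
  exists alpha. split; [|split]; intros lam Hl; destruct (Hal lam Hl) as [Ha Hg].
  - split; [exact Ha|]. split.
    + split; [rewrite <- Hg; apply (is_derive_phiV V hV); assumption|].
      exists (gvar V (alpha lam) lam). split; [apply (gvar_gt0 V hV) | apply (is_derive_Derive_phiV V hV)]; assumption.
    + intros b Hb [Hd _].
      assert (Hgb : gmean V b lam = Rad).
      { rewrite <- (is_derive_unique _ _ _ Hd). symmetry. apply is_derive_unique, (is_derive_phiV V hV); assumption. }
      destruct (Rtotal_order b (alpha lam)) as [H|[H|H]]; [exfalso| exact H | exfalso].
      * pose proof (gmean_lt V hV b (alpha lam) lam Hl H Ha). lra.
      * pose proof (gmean_lt V hV (alpha lam) b lam Hl H Hb). lra.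
  - exact (root_value_frechet V hV Rad hR lam Hl (alpha lam) Ha Hg alpha Hal eq_refl).
  - exact (phiV_tangent_glb V hV Rad lam (alpha lam) Hl Ha Hg).
Qed.
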